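(* Let $n$ be a positive integer and $m$ an integer. Put $\delta_m=1+(-1)^{m-1}$; for a polynomial $P$ let $\widehat{P}$ denote the sum of the terms of $P$ of odd degree and $\overline{P}=P-\delta_m\widehat{P}$. Then for $-\pi<\arg\zeta<\pi$, $$\begin{aligned}S_{-n-1,-n}(\zeta\mathrm{e}^{-m\pi i})&=(-1)^{mn}S_{-n-1,-n}(\zeta)+\frac{(-1)^{(m+1)n}}{2^nn!}\zeta^{-n}\Big\{-\delta_m\big[\widehat{A}_n(\zeta)+\widehat{B}_n(\zeta)S_{-1,0}(\zeta)+\zeta\widehat{C}_n(\zeta)S'_{-1,0}(\zeta)\big]\\&\quad+\overline{B}_n(\zeta)\big[K''_+H^{(1)}_0(\zeta)+K''_-H^{(2)}_0(\zeta)\big]-\zeta\overline{C}_n(\zeta)\big[K''_+H^{(1)}_1(\zeta)+K''_-H^{(2)}_1(\zeta)\big]\Big\},\end{aligned}$$ where $K''_\pm=-\frac{m\pi^2(m\pm1)}{4}$.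
   Context: $H^{(1)}_\nu=J_\nu+iY_\nu$, $H^{(2)}_\nu=J_\nu-iY_\nu$ are Hankel functions ($J_\nu,Y_\nu$ Bessel functions of first and second kinds); $\psi=\Gamma'/\Gamma$. $S_{-1,0}(\zeta)=\frac12\sum_{k\ge0}\frac{(-1)^k(\zeta/2)^{2k}}{(k!)^2}\big\{[\log\frac{\zeta}{2}-\psi(k+1)]^2-\frac12\psi'(k+1)+\frac{\pi^2}{4}\big\}$ and the Lommel function $S_{-n-1,-n}(\zeta)=\frac{(-1)^n\zeta^n}{n!}\frac{d^n}{d(\zeta^2)^n}S_{-1,0}(\zeta)$. The polynomials $A_n,B_n,C_n$ are defined by $A_1=B_1=0$, $C_1=1$ and for $n\ge2$: $A_n=-2(n-1)A_{n-1}+\zeta A'_{n-1}+C_{n-1}$, $B_n=-2(n-1)B_{n-1}+\zeta B'_{n-1}-\zeta^2C_{n-1}$, $C_n=-2(n-1)C_{n-1}+B_{n-1}+\zeta C'_{n-1}$; with them, $S_{-n-1,-n}(\zeta)=\frac{(-1)^n\zeta^{-n}}{2^nn!}\big[A_n(\zeta)+B_n(\zeta)S_{-1,0}(\zeta)+\zeta C_n(\zeta)S'_{-1,0}(\zeta)\big]$. Right-hand side functions are on the principal branch $-\pi<\arg\zeta<\pi$; $g(\zeta\mathrm{e}^{-m\pi i})$ is the value of the analytic continuation of the principal branch at the point over $\zeta$ with argument $\arg\zeta-m\pi$. *)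

From Stdlib Require Import Reals ZArith List ClassicalEpsilon.
From Coquelicot Require Import Coquelicot.
Import ListNotations.
Open Scope R_scope.

Definition Cexp (w : C) : C :=
  (exp (Re w) * cos (Im w), exp (Re w) * sin (Im w)).

Fixpoint Cpown (z : C) (n : nat) : C :=
  match n with O => RtoC 1 | S k => Cmult z (Cpown z k) end.

Definition CSeries (a : nat -> C) : C :=
  (Series (fun k => Re (a k)), Series (fun k => Im (a k))).

Fixpoint harm (k : nat) : R :=
  match k with O => 0 | S j => harm j + / INR (S j) end.

Definition euler_gamma : R := real (Lim_seq (fun n => harm n - ln (INR n))).

(* psi (k+1) = -gamma + H_k *)
Definition psi1 (k : nat) : R := - euler_gamma + harm k.
(* psi' (k+1) = sum_{j>=0} 1/(k+1+j)^2 *)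
Definition dpsi1 (k : nat) : R := Series (fun j => / (INR (k + 1 + j)) ^ 2).

(* ---------- functions on the Riemann surface of log ----------
   A point of the surface over zeta with argument theta is encoded by
   w = ln|zeta| + i theta; so zeta = Cexp w and log zeta = w.
   The principal branch at zeta (-pi < arg zeta < pi) is the value at w with
   -pi < Im w < pi, and g(zeta e^{-m pi i}) is the value at w - m pi i. *)

Local Open Scope C_scope.

Definition kf (k : nat) : C := RtoC (INR (fact k)).

Definition J0 (w : C) : C :=
  CSeries (fun k => RtoC ((-1) ^ k) * Cpown (Cexp w / RtoC 2) (2 * k) / (kf k * kf k)).

Definition J1 (w : C) : C :=
  CSeries (fun k => RtoC ((-1) ^ k) * Cpown (Cexp w / RtoC 2) (2 * k + 1)
                     / (kf k * kf (k + 1))).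

Definition Y0 (w : C) : C :=
  RtoC (2 / PI) *
  CSeries (fun k => RtoC ((-1) ^ k) * Cpown (Cexp w / RtoC 2) (2 * k) / (kf k * kf k)
                     * (w - RtoC (ln 2) - RtoC (psi1 k))).

Definition Y1 (w : C) : C :=
  - (RtoC (2 / PI) / Cexp w)
  + RtoC (2 / PI) * (w - RtoC (ln 2)) * J1 w
  - RtoC (1 / PI) *
    CSeries (fun k => RtoC ((-1) ^ k) * RtoC (psi1 k + psi1 (k + 1))
                       * Cpown (Cexp w / RtoC 2) (2 * k + 1) / (kf k * kf (k + 1))).

Definition H1_0 (w : C) : C := J0 w + Ci * Y0 w.
Definition H2_0 (w : C) : C := J0 w - Ci * Y0 w.
Definition H1_1 (w : C) : C := J1 w + Ci * Y1 w.
Definition H2_1 (w : C) : C := J1 w - Ci * Y1 w.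

Definition S10 (w : C) : C :=
  RtoC (1 / 2) *
  CSeries (fun k => RtoC ((-1) ^ k) * Cpown (Cexp w / RtoC 2) (2 * k) / (kf k * kf k)
     * ((w - RtoC (ln 2) - RtoC (psi1 k)) * (w - RtoC (ln 2) - RtoC (psi1 k))
        - RtoC (dpsi1 k / 2) + RtoC (PI ^ 2 / 4))).

(* derivative on the surface with respect to the local coordinate `coord`
   (coord = zeta = Cexp for d/dzeta, coord = zeta^2 for d/d(zeta^2)) *)
Definition has_coord_deriv (coord f : C -> C) (w l : C) : Prop :=
  forall eps : R, 0 < eps -> exists delta : R, 0 < delta /\
    forall w' : C, 0 < Cmod (w' - w) < delta ->
      Cmod ((f w' - f w) / (coord w' - coord w) - l) < eps.

Definition coord_deriv (coord f : C -> C) (w : C) : C :=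
  epsilon (inhabits (RtoC 0)) (fun l => has_coord_deriv coord f w l).

Definition dS10 (w : C) : C := coord_deriv Cexp S10 w.

Fixpoint iterD2 (n : nat) (g : C -> C) : C -> C :=
  match n with
  | O => g
  | S k => coord_deriv (fun v => Cexp v * Cexp v) (iterD2 k g)
  end.

Definition Lommel (n : nat) (w : C) : C :=
  RtoC ((-1) ^ n) * Cpown (Cexp w) n / kf n * iterD2 n S10 w.

Local Close Scope C_scope.

(* ---------- polynomials with real coefficients, as coefficient lists
   (constant term first) ---------- *)
Fixpoint padd (p q : list R) : list R :=
  match p, q with
  | [], _ => q
  | _, [] => p
  | a :: p', b :: q' => (a + b) :: padd p' q'
  end.

Definition pscale (c : R) (p : list R) : list R := map (Rmult c) p.

Definition pX (p : list R) : list R := 0 :: p.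

(* zeta * P'(zeta): coefficient k becomes k * c_k *)
Fixpoint pxd_aux (k : nat) (p : list R) : list R :=
  match p with [] => [] | a :: p' => (INR k * a) :: pxd_aux (S k) p' end.
Definition pxd (p : list R) : list R := pxd_aux 0 p.

Fixpoint phat_aux (k : nat) (p : list R) : list R :=
  match p with [] => [] | a :: p' => (if Nat.odd k then a else 0) :: phat_aux (S k) p' end.
Definition phat (p : list R) : list R := phat_aux 0 p.

Definition pbar (delta : R) (p : list R) : list R := padd p (pscale (- delta) (phat p)).

Definition peval (p : list R) (z : C) : C :=
  fold_right (fun a acc => Cplus (RtoC a) (Cmult z acc)) (RtoC 0) p.

(* ABC n = (A_n, B_n, C_n) for n >= 1 (value at n = 0 irrelevant) *)
Fixpoint ABC (n : nat) : list R * list R * list R :=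
  match n with
  | O => ([], [], [1])
  | S O => ([], [], [1])
  | S k =>
      let '(a, b, c) := ABC k in
      (padd (pscale (-2 * INR k) a) (padd (pxd a) c),
       padd (pscale (-2 * INR k) b) (padd (pxd b) (pscale (-1) (pX (pX c)))),
       padd (pscale (-2 * INR k) c) (padd b (pxd c)))
  end.

Definition polyA (n : nat) : list R := fst (fst (ABC n)).
Definition polyB (n : nat) : list R := snd (fst (ABC n)).
Definition polyC (n : nat) : list R := snd (ABC n).

(* Work on the Riemann surface of log in the coordinate w = log zeta, so that
   d/dw = zeta d/dzeta and d/d(zeta^2) = (2 zeta^2)^-1 d/dw.  Expanding in powers
   of (zeta/2)^2, S_{-1,0} solves the Lommel equation (d/dw)^2 S + zeta^2 S = 1 and
   J_0, Y_0 solve the homogeneous one.  For any U with (d/dw)^2 U + zeta^2 U = a0,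
   induction on n gives
     (d/d(zeta^2))^n U = 2^-n zeta^-2n (a0 A_n + B_n U + C_n dU/dw),
   the recursion for A_n, B_n, C_n being exactly one differentiation step.
   Passing to w - m pi i fixes zeta^2 and every series in (zeta/2)^2 but shifts
   log(zeta/2) by -m pi i; hence S_{-1,0} picks up the homogeneous solution
   K''_+ H^(1)_0 + K''_- H^(2)_0, and the formula applied to it (a0 = 0) yields the
   jump of S_{-n-1,-n}.  Finally A_n, B_n, C_n are even polynomials, so their odd
   parts vanish and the delta_m terms drop out. *)

From Stdlib Require Import Reals ZArith List Lra Lia ClassicalEpsilon FunctionalExtensionality PropExtensionality.
From Coquelicot Require Import Coquelicot.
Open Scope R_scope.

Lemma fact_pos k : 0 < INR (fact k).
Proof. apply lt_0_INR, lt_O_fact. Qed.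

Lemma INR_le_pow2 k : INR k <= 2 ^ k.
Proof.
  induction k; [simpl; lra|]. rewrite S_INR. simpl.
  assert (1 <= 2 ^ k) by (apply pow_R1_Rle; lra). lra.
Qed.

Lemma INR_sqr_le_pow4 k : INR k ^ 2 <= 4 ^ k.
Proof.
  replace 4 with (2 * 2) by ring. rewrite Rpow_mult_distr, <- Rsqr_pow2.
  apply Rsqr_incr_1; [apply INR_le_pow2 | apply pos_INR | apply pow_le; lra].
Qed.

Lemma ex_series_exp_terms x : ex_series (fun k => x ^ k / INR (fact k)).
Proof.
  assert (H := is_exp_Reals x). unfold is_pseries in H.
  exists (exp x). eapply is_series_ext; [|exact H].
  intro n. simpl. rewrite pow_n_pow. unfold scal; simpl. unfold mult; simpl. unfold Rdiv. ring.
Qed.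

Lemma Series_nonneg (u : nat -> R) : (forall k, 0 <= u k) -> ex_series u -> 0 <= Series u.
Proof.
  intros H Hu. replace 0 with (Series (fun _ => 0)).
  - apply Series_le; auto. intro; split; [lra|auto].
  - rewrite (Series_ext _ (fun n => 0 * u n)) by (intro; ring).
    rewrite Series_scal_l. ring.
Qed.

Definition exp_type (a : nat -> R) : Prop := exists M c, 0 <= M /\ 0 <= c /\
  forall k, Rabs (a k) <= M * c ^ k / INR (fact k).

(* Coefficients of [z * f], [f'] and [d/dw (f ((exp w / 2)^2))], for [f = sum a_k z^k]. *)
Definition coef_mulX (a : nat -> R) (k : nat) : R := match k with O => 0 | S j => a j end.
Definition coef_deriv (a : nat -> R) (k : nat) : R := INR (S k) * a (S k).
Definition coef_dw (a : nat -> R) (k : nat) : R := 2 * INR k * a k.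
Definition delta0 (k : nat) : R := match k with O => 1 | _ => 0 end.

Lemma exp_type_ext a b : (forall k, a k = b k) -> exp_type a -> exp_type b.
Proof.
  intros H [M [c [HM [Hc Ha]]]]. exists M, c. repeat split; auto.
  intro k; rewrite <- H; auto.
Qed.

Lemma exp_type_plus a b : exp_type a -> exp_type b -> exp_type (fun k => a k + b k).
Proof.
  intros [M [c [HM [Hc Ha]]]] [M' [c' [HM' [Hc' Hb]]]].
  exists (M + M'), (Rmax c c'). split; [lra|]. split; [apply Rle_trans with c; auto; apply Rmax_l|].
  intro k. eapply Rle_trans; [apply Rabs_triang|].
  assert (Hf := fact_pos k).
  assert (c ^ k <= Rmax c c' ^ k) by (apply pow_incr; split; auto; apply Rmax_l).
  assert (c' ^ k <= Rmax c c' ^ k) by (apply pow_incr; split; auto; apply Rmax_r).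
  specialize (Ha k). specialize (Hb k). unfold Rdiv in *.
  assert (0 < / INR (fact k)) by (apply Rinv_0_lt_compat; auto).
  assert (M * c ^ k * / INR (fact k) <= M * Rmax c c' ^ k * / INR (fact k)).
  { apply Rmult_le_compat_r; [lra|]. apply Rmult_le_compat_l; auto. }
  assert (M' * c' ^ k * / INR (fact k) <= M' * Rmax c c' ^ k * / INR (fact k)).
  { apply Rmult_le_compat_r; [lra|]. apply Rmult_le_compat_l; auto. }
  nra.
Qed.

Lemma exp_type_mul_geom a (b : nat -> R) K B : exp_type a -> 0 <= K -> 0 <= B ->
  (forall k, Rabs (b k) <= K * B ^ k) -> exp_type (fun k => b k * a k).
Proof.
  intros [M [c [HM [Hc Ha]]]] HK HB Hb. exists (K * M), (B * c). split; [nra|]. split; [nra|].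
  intro k. rewrite Rabs_mult, Rpow_mult_distr.
  apply Rle_trans with (K * B ^ k * (M * c ^ k / INR (fact k))).
  - apply Rmult_le_compat; auto; apply Rabs_pos.
  - right. unfold Rdiv. ring.
Qed.

Lemma exp_type_scal x a : exp_type a -> exp_type (fun k => x * a k).
Proof.
  intro Ha. apply exp_type_mul_geom with (Rabs x) 1; auto; try lra.
  - apply Rabs_pos.
  - intro. rewrite pow1. lra.
Qed.

Lemma exp_type_minus a b : exp_type a -> exp_type b -> exp_type (fun k => a k - b k).
Proof.
  intros Ha Hb. apply exp_type_ext with (fun k => a k + -1 * b k); [intro; ring|].
  apply exp_type_plus, exp_type_scal; auto.
Qed.

Lemma exp_type_zero : exp_type (fun _ => 0).
Proof.
  exists 0, 0. repeat split; try lra. intro. rewrite Rabs_R0. unfold Rdiv. lra.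
Qed.

Lemma exp_type_delta0 : exp_type delta0.
Proof.
  exists 1, 1. repeat split; try lra. intros [|k]; simpl.
  - rewrite Rabs_R1. lra.
  - rewrite Rabs_R0, pow1. apply Rmult_le_pos; [lra|]. left; apply Rinv_0_lt_compat, (fact_pos (S k)).
Qed.

Lemma exp_type_dw a : exp_type a -> exp_type (coef_dw a).
Proof.
  intro H. apply exp_type_ext with (fun k => (2 * INR k) * a k); [intro; unfold coef_dw; ring|].
  apply exp_type_mul_geom with 2 2; auto; try lra.
  intro k. rewrite Rabs_pos_eq by (pose proof (pos_INR k); lra).
  apply Rmult_le_compat_l; [lra | apply INR_le_pow2].
Qed.

Lemma exp_type_deriv a : exp_type a -> exp_type (coef_deriv a).
Proof.
  intros [M [c [HM [Hc Ha]]]]. exists (M * c), c. split; [nra|]. split; [auto|].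
  intro k. unfold coef_deriv. rewrite Rabs_mult, Rabs_pos_eq by apply pos_INR.
  specialize (Ha (S k)). rewrite fact_simpl, mult_INR in Ha. simpl pow in Ha.
  assert (HS : 0 < INR (S k)) by (apply lt_0_INR; lia).
  assert (Hf := fact_pos k).
  apply Rle_trans with (INR (S k) * (M * (c * c ^ k) / (INR (S k) * INR (fact k)))).
  - apply Rmult_le_compat_l; lra.
  - right. field. lra.
Qed.

Lemma exp_type_mulX a : exp_type a -> exp_type (coef_mulX a).
Proof.
  intros [M [c [HM [Hc Ha]]]]. exists M, (2 * (c + 1)). split; [auto|]. split; [lra|].
  intros [|k]; simpl coef_mulX.
  - rewrite Rabs_R0. simpl. unfold Rdiv. rewrite Rinv_1. lra.
  - eapply Rle_trans; [apply Ha|].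
    rewrite fact_simpl, mult_INR, Rpow_mult_distr.
    assert (Hf := fact_pos k). assert (HS : 1 <= INR (S k)) by (apply (le_INR 1); lia).
    assert (Hk : INR (S k) <= 2 ^ S k) by apply INR_le_pow2.
    assert (Hc1 : c ^ k <= (c + 1) ^ S k).
    { apply Rle_trans with ((c + 1) ^ k); [apply pow_incr; lra | apply Rle_pow; [lra|lia]]. }
    assert (0 <= M * c ^ k) by (apply Rmult_le_pos; auto; apply pow_le; lra).
    assert (M * c ^ k <= M * (c + 1) ^ S k) by (apply Rmult_le_compat_l; lra).
    unfold Rdiv. rewrite Rinv_mult.
    assert (0 < / INR (fact k)) by (apply Rinv_0_lt_compat; lra).
    assert (1 <= 2 ^ S k * / INR (S k)).
    { apply Rmult_le_reg_r with (INR (S k)); [lra|]. rewrite Rmult_assoc, Rinv_l by lra. lra. }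
    apply Rle_trans with (M * (c + 1) ^ S k * / INR (fact k)); [apply Rmult_le_compat_r; lra|].
    replace (M * (2 ^ S k * (c + 1) ^ S k) * (/ INR (S k) * / INR (fact k)))
      with ((M * (c + 1) ^ S k * / INR (fact k)) * (2 ^ S k * / INR (S k))) by ring.
    assert (0 <= M * (c + 1) ^ S k * / INR (fact k)) by (apply Rmult_le_pos; lra).
    nra.
Qed.

Definition telescope (j : nat) : R := / INR (j + 1) - / INR (j + 2).

Lemma sum_telescope n : sum_f_R0 telescope n = 1 - / INR (n + 2).
Proof.
  induction n; [unfold telescope; simpl; field|].
  rewrite tech5, IHn. unfold telescope.
  replace (S n + 1)%nat with (n + 2)%nat by lia. replace (S n + 2)%nat with (S (n + 2)) by lia.
  ring.
Qed.

Lemma is_series_telescope : is_series telescope 1.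
Proof.
  apply is_series_Reals. intros eps Heps.
  destruct (archimed (/ eps)) as [H1 _].
  assert (Hup : (0 <= up (/ eps))%Z).
  { apply le_IZR. assert (0 < / eps) by (apply Rinv_0_lt_compat; lra). lra. }
  exists (Z.to_nat (up (/ eps))). intros n Hn.
  rewrite sum_telescope. unfold Rdist.
  replace (1 - / INR (n + 2) - 1) with (- / INR (n + 2)) by ring.
  assert (HnR : IZR (up (/ eps)) <= INR n).
  { rewrite <- (Z2Nat.id (up (/ eps))) by auto. rewrite <- INR_IZR_INZ. apply le_INR. lia. }
  assert (Hpos : 0 < INR (n + 2)) by (apply lt_0_INR; lia).
  rewrite Rabs_Ropp, Rabs_pos_eq by (left; apply Rinv_0_lt_compat; auto).
  assert (H2 : / eps < INR (n + 2)) by (rewrite plus_INR; simpl; lra).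
  apply Rinv_lt_contravar in H2; [rewrite Rinv_inv in H2; auto|].
  apply Rmult_lt_0_compat; auto. apply Rinv_0_lt_compat; lra.
Qed.

Lemma inv_sqr_le_telescope k j : / INR (k + 1 + j) ^ 2 <= 2 * telescope j.
Proof.
  unfold telescope.
  assert (H1 : 1 <= INR (j + 1)) by (apply (le_INR 1); lia).
  assert (H2 : INR (j + 2) = INR (j + 1) + 1) by (rewrite !plus_INR; simpl; ring).
  assert (H3 : INR (j + 1) <= INR (k + 1 + j)) by (apply le_INR; lia).
  rewrite H2. set (x := INR (j + 1)) in *.
  apply Rle_trans with (/ x ^ 2).
  - apply Rinv_le_contravar; [apply pow_lt; lra | apply pow_incr; lra].
  - replace (2 * (/ x - / (x + 1))) with (2 / (x * (x + 1))) by (field; lra).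
    replace (/ x ^ 2) with (1 / (x * x)) by (field; lra).
    apply Rmult_le_reg_r with (x * x * (x + 1)); [nra|].
    replace (1 / (x * x) * (x * x * (x + 1))) with (x + 1) by (field; lra).
    replace (2 / (x * (x + 1)) * (x * x * (x + 1))) with (2 * x) by (field; lra). lra.
Qed.

Lemma inv_sqr_pos k j : 0 < / INR (k + 1 + j) ^ 2.
Proof. apply Rinv_0_lt_compat, pow_lt, lt_0_INR; lia. Qed.

Lemma ex_series_inv_sqr k : ex_series (fun j => / INR (k + 1 + j) ^ 2).
Proof.
  apply (ex_series_le (V:=R_CompleteNormedModule) _ (fun j => 2 * telescope j)).
  - intro j. change norm with Rabs. rewrite Rabs_pos_eq by (left; apply inv_sqr_pos).
    apply inv_sqr_le_telescope.
  - apply (ex_series_scal (V:=R_NormedModule)). exists 1. apply is_series_telescope.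
Qed.

Lemma dpsi1_bound k : Rabs (dpsi1 k) <= 2.
Proof.
  unfold dpsi1. rewrite Rabs_pos_eq.
  - replace 2 with (Series (fun j => 2 * telescope j)).
    + apply Series_le; [intro j; split; [left; apply inv_sqr_pos | apply inv_sqr_le_telescope]|].
      apply (ex_series_scal (V:=R_NormedModule)). exists 1. apply is_series_telescope.
    + rewrite Series_scal_l, (is_series_unique _ _ is_series_telescope). ring.
  - apply Series_nonneg; [intro j; left; apply inv_sqr_pos | apply ex_series_inv_sqr].
Qed.

Lemma dpsi1_S k : dpsi1 k = / INR (S k) ^ 2 + dpsi1 (S k).
Proof.
  unfold dpsi1. rewrite Series_incr_1 by apply ex_series_inv_sqr.
  replace (k + 1 + 0)%nat with (S k) by lia. f_equal.
  apply Series_ext. intro j. replace (k + 1 + S j)%nat with (S k + 1 + j)%nat by lia. reflexivity.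
Qed.

Lemma psi1_S k : psi1 (S k) = psi1 k + / INR (S k).
Proof. unfold psi1. change (harm (S k)) with (harm k + / INR (S k)). ring. Qed.

Definition psi1_const : R := Rabs euler_gamma + 1.

Lemma psi1_const_ge0 : 0 <= psi1_const.
Proof. unfold psi1_const. pose proof (Rabs_pos euler_gamma). lra. Qed.

Lemma psi1_bound k : Rabs (psi1 k) <= psi1_const * 2 ^ k.
Proof.
  assert (Hh : 0 <= harm k <= INR k).
  { induction k; [simpl; lra|]. change (harm (S k)) with (harm k + / INR (S k)).
    assert (0 < / INR (S k)) by (apply Rinv_0_lt_compat, lt_0_INR; lia).
    assert (/ INR (S k) <= 1) by (rewrite <- Rinv_1; apply Rinv_le_contravar; [lra | apply (le_INR 1); lia]).
    rewrite S_INR in *. lra. }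
  unfold psi1, psi1_const. assert (H2 := INR_le_pow2 k).
  assert (H3 : 1 <= 2 ^ k) by (apply pow_R1_Rle; lra).
  eapply Rle_trans; [apply Rabs_triang|]. rewrite Rabs_Ropp, (Rabs_pos_eq (harm k)) by lra.
  pose proof (Rabs_pos euler_gamma). nra.
Qed.

(** * Series coefficients of the Bessel and Lommel functions *)

(* Coefficients in powers of [(zeta/2)^2]; the [Y] and [S] coefficients hold only
   the parts not proportional to [log (zeta/2)]. *)
Definition J0_coef (k : nat) : R := (-1) ^ k / (INR (fact k) * INR (fact k)).
Definition J1_coef (k : nat) : R := (-1) ^ k / (INR (fact k) * INR (fact (S k))).
Definition Y0_coef (k : nat) : R := J0_coef k * psi1 k.
Definition Y1_coef (k : nat) : R := J1_coef k * (psi1 k + psi1 (S k)).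
Definition ZJ1_coef : nat -> R := coef_mulX (fun j => 2 * J1_coef j).
Definition ZY1_coef : nat -> R := coef_mulX (fun j => 2 * Y1_coef j).
Definition S10_coef (k : nat) : R := J0_coef k * (psi1 k ^ 2 - dpsi1 k / 2 + PI ^ 2 / 4).

Lemma inv_fact_le1 k : 0 < / INR (fact k) <= 1.
Proof.
  assert (H := fact_pos k). assert (1 <= INR (fact k)) by (apply (le_INR 1), lt_O_fact).
  split; [apply Rinv_0_lt_compat; lra | rewrite <- Rinv_1; apply Rinv_le_contravar; lra].
Qed.

Lemma exp_type_J0_coef : exp_type J0_coef.
Proof.
  exists 1, 1. repeat split; try lra. intro k. unfold J0_coef, Rdiv.
  rewrite pow1, Rabs_mult, pow_1_abs, Rinv_mult, Rabs_mult.
  assert (H := inv_fact_le1 k). rewrite Rabs_pos_eq by lra. nra.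
Qed.

Lemma exp_type_J1_coef : exp_type J1_coef.
Proof.
  exists 1, 1. repeat split; try lra. intro k. unfold J1_coef, Rdiv.
  rewrite pow1, Rabs_mult, pow_1_abs, Rinv_mult, Rabs_mult.
  assert (H := inv_fact_le1 k). assert (H' := inv_fact_le1 (S k)).
  rewrite !Rabs_pos_eq by lra. nra.
Qed.

Lemma exp_type_Y0_coef : exp_type Y0_coef.
Proof.
  apply exp_type_ext with (fun k => psi1 k * J0_coef k); [intro; unfold Y0_coef; ring|].
  apply exp_type_mul_geom with psi1_const 2;
    auto using exp_type_J0_coef, psi1_const_ge0, psi1_bound; lra.
Qed.

Lemma exp_type_Y1_coef : exp_type Y1_coef.
Proof.
  apply exp_type_ext with (fun k => (psi1 k + psi1 (S k)) * J1_coef k); [intro; unfold Y1_coef; ring|].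
  apply exp_type_mul_geom with (3 * psi1_const) 2;
    auto using exp_type_J1_coef; try (pose proof psi1_const_ge0; lra).
  intro k. eapply Rle_trans; [apply Rabs_triang|].
  assert (H1 := psi1_bound k). assert (H2 := psi1_bound (S k)). simpl pow in H2. lra.
Qed.

Lemma exp_type_S10_coef : exp_type S10_coef.
Proof.
  apply exp_type_ext with (fun k => (psi1 k ^ 2 - dpsi1 k / 2 + PI ^ 2 / 4) * J0_coef k);
    [intro; unfold S10_coef; ring|].
  pose proof (pow2_ge_0 PI). pose proof (pow2_ge_0 psi1_const).
  apply exp_type_mul_geom with (psi1_const ^ 2 + 1 + PI ^ 2) 4; auto using exp_type_J0_coef; try lra.
  intro k. assert (H1 := psi1_bound k). assert (H2 := dpsi1_bound k).
  assert (H3 : 1 <= 4 ^ k) by (apply pow_R1_Rle; lra).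
  assert (H4 : Rabs (psi1 k ^ 2) <= psi1_const ^ 2 * 4 ^ k).
  { replace 4 with (2 * 2) by ring. rewrite <- RPow_abs, Rpow_mult_distr.
    replace (psi1_const ^ 2 * (2 ^ k * 2 ^ k)) with ((psi1_const * 2 ^ k) ^ 2) by ring.
    apply pow_incr. split; [apply Rabs_pos | auto]. }
  eapply Rle_trans; [apply Rabs_triang|]. rewrite (Rabs_pos_eq (PI ^ 2 / 4)) by lra.
  eapply Rle_trans; [apply Rplus_le_compat_r, Rabs_triang|].
  rewrite Rabs_Ropp. unfold Rdiv at 1. rewrite Rabs_mult, (Rabs_pos_eq (/2)) by lra.
  assert (PI ^ 2 / 4 <= PI ^ 2 * 4 ^ k) by nra.
  nra.
Qed.

Lemma exp_type_ZJ1_coef : exp_type ZJ1_coef.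
Proof. apply exp_type_mulX, exp_type_scal, exp_type_J1_coef. Qed.

Lemma exp_type_ZY1_coef : exp_type ZY1_coef.
Proof. apply exp_type_mulX, exp_type_scal, exp_type_Y1_coef. Qed.

Lemma fact_S_INR k : INR (fact (S k)) = INR (S k) * INR (fact k).
Proof. rewrite fact_simpl, mult_INR. reflexivity. Qed.

Ltac coef_field j :=
  rewrite ?fact_S_INR, ?psi1_S, ?(dpsi1_S j); cbn [pow];
  pose proof (fact_pos j); pose proof (lt_0_INR (S j) (Nat.lt_0_succ j)); field; lra.

(* Coefficientwise forms of the Bessel and Lommel equations in [w]. *)
Lemma coef_dw_J0 k : coef_dw J0_coef k = - ZJ1_coef k.
Proof.
  destruct k as [|j]; unfold coef_dw, ZJ1_coef, coef_mulX, J0_coef, J1_coef; [simpl; ring|].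
  coef_field j.
Qed.

Lemma coef_dw_Y0 k : 2 * J0_coef k - 2 * coef_dw Y0_coef k - ZY1_coef k = 2 * delta0 k.
Proof.
  destruct k as [|j];
    unfold coef_dw, ZY1_coef, coef_mulX, delta0, Y0_coef, Y1_coef, J0_coef, J1_coef;
    [simpl; field | coef_field j].
Qed.

Lemma coef_dw_ZJ1 k : coef_dw ZJ1_coef k = coef_mulX (fun j => 4 * J0_coef j) k.
Proof.
  destruct k as [|j]; unfold coef_dw, ZJ1_coef, coef_mulX, J0_coef, J1_coef; [simpl; ring|].
  coef_field j.
Qed.

Lemma coef_dw_ZY1 k :
  2 * ZJ1_coef k - coef_dw ZY1_coef k + 2 * coef_mulX (fun j => 4 * Y0_coef j) k = 0.
Proof.
  destruct k as [|j];
    unfold coef_dw, ZJ1_coef, ZY1_coef, coef_mulX, Y0_coef, Y1_coef, J0_coef, J1_coef;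
    [simpl; ring | coef_field j].
Qed.

Lemma coef_dw2_J0 k : coef_dw (coef_dw J0_coef) k = -4 * coef_mulX J0_coef k.
Proof.
  destruct k as [|j]; unfold coef_dw, coef_mulX, J0_coef; [simpl; ring|]. coef_field j.
Qed.

Lemma coef_dw2_Y0 k :
  2 * coef_dw J0_coef k - coef_dw (coef_dw Y0_coef) k = 4 * coef_mulX Y0_coef k.
Proof.
  destruct k as [|j]; unfold coef_dw, coef_mulX, Y0_coef, J0_coef; [simpl; ring|]. coef_field j.
Qed.

Lemma coef_dw2_S10 k : 2 * J0_coef k - 4 * coef_dw Y0_coef k
  + coef_dw (coef_dw S10_coef) k + 4 * coef_mulX S10_coef k = 2 * delta0 k.
Proof.
  destruct k as [|j]; unfold coef_dw, coef_mulX, delta0, S10_coef, Y0_coef, J0_coef;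
    [simpl; field | coef_field j].
Qed.

Lemma powerRZ_of_nat x n : powerRZ x (Z.of_nat n) = x ^ n.
Proof. destruct n; [reflexivity|]. simpl. rewrite SuccNat2Pos.id_succ. reflexivity. Qed.

Lemma pow_m1_cases n : (-1) ^ n = 1 \/ (-1) ^ n = -1.
Proof. induction n; simpl; [auto|]. destruct IHn as [-> | ->]; [right|left]; ring. Qed.

Lemma powerRZ_m1_cases m : powerRZ (-1) m = 1 \/ powerRZ (-1) m = -1.
Proof.
  destruct m; simpl; [auto | apply pow_m1_cases |].
  destruct (pow_m1_cases (Pos.to_nat p)) as [-> | ->]; [left|right]; field.
Qed.

Lemma powerRZ_m1_sqr m : powerRZ (-1) m * powerRZ (-1) m = 1.
Proof. destruct (powerRZ_m1_cases m) as [-> | ->]; ring. Qed.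

Lemma powerRZ_m1_mul_nat m n : powerRZ (-1) (m * Z.of_nat n) = powerRZ (-1) m ^ n.
Proof.
  induction n; [simpl; rewrite Z.mul_0_r; reflexivity|].
  rewrite Nat2Z.inj_succ. replace (m * Z.succ (Z.of_nat n))%Z with (m * Z.of_nat n + m)%Z by lia.
  rewrite powerRZ_add, IHn by lra. simpl. ring.
Qed.

Lemma powerRZ_m1_succ_mul_nat m n :
  powerRZ (-1) ((m + 1) * Z.of_nat n) = (-1) ^ n * powerRZ (-1) m ^ n.
Proof.
  replace ((m + 1) * Z.of_nat n)%Z with (m * Z.of_nat n + Z.of_nat n)%Z by lia.
  rewrite powerRZ_add, powerRZ_m1_mul_nat, powerRZ_of_nat by lra. ring.
Qed.

Lemma trig_INR_PI n : cos (INR n * PI) = (-1) ^ n /\ sin (INR n * PI) = 0.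
Proof.
  induction n; [simpl; rewrite Rmult_0_l, cos_0, sin_0; auto|].
  rewrite S_INR. replace ((INR n + 1) * PI) with (INR n * PI + PI) by ring.
  rewrite neg_cos, neg_sin. destruct IHn as [-> ->]. split; simpl; ring.
Qed.

Lemma trig_IZR_PI m : cos (IZR m * PI) = powerRZ (-1) m /\ sin (IZR m * PI) = 0.
Proof.
  destruct m.
  - simpl. rewrite Rmult_0_l, cos_0, sin_0. auto.
  - rewrite <- positive_nat_Z, <- INR_IZR_INZ, powerRZ_of_nat. apply trig_INR_PI.
  - replace (IZR (Z.neg p) * PI) with (- (INR (Pos.to_nat p) * PI))
      by (rewrite INR_IZR_INZ, positive_nat_Z; change (Z.neg p) with (- Z.pos p)%Z;
          rewrite opp_IZR; ring).
    rewrite cos_neg, sin_neg. destruct (trig_INR_PI (Pos.to_nat p)) as [-> ->].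
    simpl. split; [|ring].
    destruct (pow_m1_cases (Pos.to_nat p)) as [-> | ->]; field.
Qed.

(** * Parity of the polynomials [A_n], [B_n], [C_n] *)

Definition even_poly (p : list R) : Prop := forall i, Nat.odd i = true -> nth i p 0 = 0.

Lemma nth_padd p q i : nth i (padd p q) 0 = nth i p 0 + nth i q 0.
Proof.
  revert q i. induction p as [|a p IH]; intros [|b q] [|i]; simpl; try ring. apply IH.
Qed.

Lemma nth_pscale c p i : nth i (pscale c p) 0 = c * nth i p 0.
Proof. revert i. induction p as [|a p IH]; intros [|i]; simpl; try ring. apply IH. Qed.

Lemma nth_pxd_aux k p i : nth i (pxd_aux k p) 0 = INR (k + i) * nth i p 0.
Proof.
  revert k i. induction p as [|a p IH]; intros k [|i]; simpl; try ring.
  - rewrite Nat.add_0_r. ring.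
  - rewrite IH. do 2 f_equal. lia.
Qed.

Lemma even_poly_padd p q : even_poly p -> even_poly q -> even_poly (padd p q).
Proof. intros Hp Hq i Hi. rewrite nth_padd, Hp, Hq by auto. ring. Qed.

Lemma even_poly_pscale c p : even_poly p -> even_poly (pscale c p).
Proof. intros Hp i Hi. rewrite nth_pscale, Hp by auto. ring. Qed.

Lemma even_poly_pxd p : even_poly p -> even_poly (pxd p).
Proof. intros Hp i Hi. unfold pxd. rewrite nth_pxd_aux, Hp by auto. ring. Qed.

Lemma even_poly_pX2 p : even_poly p -> even_poly (pX (pX p)).
Proof.
  intros Hp [|[|i]] Hi; [discriminate | reflexivity |].
  apply Hp. rewrite <- Hi, (Nat.odd_succ (S i)), Nat.even_succ. reflexivity.
Qed.

Lemma ABC_S n : (1 <= n)%nat ->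
  ABC (S n) =
  (padd (pscale (-2 * INR n) (polyA n)) (padd (pxd (polyA n)) (polyC n)),
   padd (pscale (-2 * INR n) (polyB n)) (padd (pxd (polyB n)) (pscale (-1) (pX (pX (polyC n))))),
   padd (pscale (-2 * INR n) (polyC n)) (padd (polyB n) (pxd (polyC n)))).
Proof.
  intro Hn. destruct n as [|n]; [lia|]. unfold polyA, polyB, polyC.
  change (ABC (S (S n))) with
    (let '(a, b, c) := ABC (S n) in
     (padd (pscale (-2 * INR (S n)) a) (padd (pxd a) c),
      padd (pscale (-2 * INR (S n)) b) (padd (pxd b) (pscale (-1) (pX (pX c)))),
      padd (pscale (-2 * INR (S n)) c) (padd b (pxd c)))).
  destruct (ABC (S n)) as [[a b] c]. reflexivity.
Qed.

Lemma even_poly_ABC n : even_poly (polyA n) /\ even_poly (polyB n) /\ even_poly (polyC n).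
Proof.
  induction n as [|n IH].
  - repeat split; intros [|[|[|i]]] H; try discriminate; reflexivity.
  - destruct n as [|n].
    + repeat split; intros [|[|[|i]]] H; try discriminate; reflexivity.
    + unfold polyA, polyB, polyC at 1. rewrite ABC_S by lia. cbn [fst snd].
      destruct IH as [Ha [Hb Hc]].
      repeat split; repeat (apply even_poly_padd || apply even_poly_pscale
                            || apply even_poly_pxd || apply even_poly_pX2); auto.
Qed.

Lemma Rabs_taylor2_le (f f' f'' : R -> R) (M x : R) :
  (forall t, is_derive f t (f' t)) -> (forall t, is_derive f' t (f'' t)) ->
  (forall t, Rabs t <= Rabs x -> Rabs (f'' t) <= M) ->
  Rabs (f x - f 0 - f' 0 * x) <= M * x ^ 2.
Proof.
  intros Hf Hf' HM.
  set (g := fun t => f t - f' 0 * t).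
  assert (Hg : forall t, is_derive g t (f' t - f' 0)).
  { intro t. apply (is_derive_minus f (fun t => f' 0 * t)); [apply Hf|].
    auto_derive; auto; ring. }
  destruct (MVT_gen g 0 x (fun t => f' t - f' 0)) as [c [Hc Hgc]].
  { intros; apply Hg. }
  { intros. apply continuity_pt_filterlim, (ex_derive_continuous (K:=R_AbsRing) g).
    eexists; apply Hg. }
  destruct (MVT_gen f' 0 c f'') as [d [Hd Hfd]].
  { intros; apply Hf'. }
  { intros. apply continuity_pt_filterlim, (ex_derive_continuous (K:=R_AbsRing) f').
    eexists; apply Hf'. }
  unfold g in Hgc.
  replace (f x - f 0 - f' 0 * x) with ((f' c - f' 0) * x) by lra.
  rewrite Hfd.
  assert (Hcx : Rabs c <= Rabs x).
  { unfold Rmin, Rmax in Hc; destruct (Rle_dec 0 x); unfold Rabs;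
    repeat destruct Rcase_abs; lra. }
  assert (Hdc : Rabs d <= Rabs c).
  { unfold Rmin, Rmax in Hd; destruct (Rle_dec 0 c); unfold Rabs;
    repeat destruct Rcase_abs; lra. }
  assert (Hd'' := HM d ltac:(lra)).
  replace (c - 0) with c by ring.
  rewrite !Rabs_mult, <- (pow2_abs x).
  pose proof (Rabs_pos c). pose proof (Rabs_pos (f'' d)).
  assert (Rabs (f'' d) * Rabs c <= M * Rabs x) by (apply Rmult_le_compat; lra).
  nra.
Qed.

Lemma exp_taylor2 a : Rabs a <= 1 -> Rabs (exp a - 1 - a) <= 3 * a ^ 2.
Proof.
  intro Ha. rewrite <- exp_0 at 1. replace (exp a - exp 0 - a) with (exp a - exp 0 - exp 0 * a)
    by (rewrite exp_0; ring).
  apply (Rabs_taylor2_le exp exp exp); try (intro; apply is_derive_exp).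
  intros t Ht. rewrite Rabs_right by (left; apply exp_pos).
  apply Rle_trans with (exp 1); [|apply exp_le_3].
  assert (Ht1 : t <= 1) by (unfold Rabs in *; repeat destruct Rcase_abs; lra).
  destruct (Rle_lt_or_eq_dec t 1 Ht1) as [H| ->]; [left; apply exp_increasing, H|lra].
Qed.

Lemma cos_taylor2 b : Rabs (cos b - 1) <= b ^ 2.
Proof.
  replace (cos b - 1) with (cos b - cos 0 - (- sin 0) * b) by (rewrite cos_0, sin_0; ring).
  rewrite <- (Rmult_1_l (b ^ 2)).
  apply (Rabs_taylor2_le cos (fun t => - sin t) (fun t => - cos t)).
  - intro; apply is_derive_cos.
  - intro t; auto_derive; auto; ring.
  - intros t _. rewrite Rabs_Ropp. apply Rabs_le, COS_bound.
Qed.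

Lemma sin_taylor2 b : Rabs (sin b - b) <= b ^ 2.
Proof.
  replace (sin b - b) with (sin b - sin 0 - cos 0 * b) by (rewrite cos_0, sin_0; ring).
  rewrite <- (Rmult_1_l (b ^ 2)).
  apply (Rabs_taylor2_le sin cos (fun t => - sin t)).
  - intro; apply is_derive_sin.
  - intro; apply is_derive_cos.
  - intros t _. rewrite Rabs_Ropp. apply Rabs_le, SIN_bound.
Qed.

Lemma Cexp_add a b : Cexp (a + b) = (Cexp a * Cexp b)%C.
Proof.
  destruct a as [a1 a2], b as [b1 b2]. unfold Cexp, Cmult; simpl.
  rewrite exp_plus, cos_plus, sin_plus. apply injective_projections; simpl; ring.
Qed.

Lemma Cexp_0 : Cexp 0 = 1%C.
Proof.
  unfold Cexp; simpl. rewrite exp_0, cos_0, sin_0. apply injective_projections; simpl; ring.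
Qed.

Lemma Cmod_Cexp w : Cmod (Cexp w) = exp (Re w).
Proof.
  unfold Cexp, Cmod; cbn [fst snd].
  replace ((exp (Re w) * cos (Im w)) ^ 2 + (exp (Re w) * sin (Im w)) ^ 2) with (exp (Re w) ^ 2)
    by (assert (Hc := sin2_cos2 (Im w)); unfold Rsqr in Hc; nra).
  apply sqrt_pow2. left; apply exp_pos.
Qed.

Lemma Cexp_neq0 w : Cexp w <> 0%C.
Proof.
  intro H. assert (H1 := Cmod_Cexp w). rewrite H, Cmod_0 in H1.
  assert (H2 := exp_pos (Re w)). lra.
Qed.

Lemma im_le_Cmod c : Rabs (Im c) <= Cmod c.
Proof.
  assert (H := Cmod2_alt c). assert (H0 := Cmod_ge_0 c).
  rewrite <- (Rabs_right (Cmod c)) by lra.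
  apply Rsqr_le_abs_0. unfold Rsqr. simpl in H. nra.
Qed.

Lemma Cmod_le_Re_Im c : Cmod c <= Rabs (Re c) + Rabs (Im c).
Proof.
  assert (H := Cmod2_alt c). assert (H0 := Cmod_ge_0 c).
  pose proof (Rabs_pos (Re c)). pose proof (Rabs_pos (Im c)).
  rewrite <- (pow2_abs (Re c)), <- (pow2_abs (Im c)) in H. nra.
Qed.

Lemma Cexp_taylor2 h : Cmod h <= 1 -> Cmod (Cexp h - 1 - h)%C <= 17 * Cmod h ^ 2.
Proof.
  destruct h as [a b]. set (c := Cmod (a, b)). intro Hc1.
  assert (Hc0 : 0 <= c) by apply Cmod_ge_0.
  assert (Ha : Rabs a <= c) by apply (re_le_Cmod (a, b)).
  assert (Hb : Rabs b <= c) by apply (im_le_Cmod (a, b)).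
  assert (Ha2 : a ^ 2 <= c ^ 2) by (rewrite <- (pow2_abs a); apply pow_incr; split; [apply Rabs_pos|lra]).
  assert (Hb2 : b ^ 2 <= c ^ 2) by (rewrite <- (pow2_abs b); apply pow_incr; split; [apply Rabs_pos|lra]).
  assert (He := exp_taylor2 a ltac:(lra)).
  assert (Hco := cos_taylor2 b). assert (Hsi := sin_taylor2 b).
  set (E := exp a) in *. assert (HE0 : 0 < E) by apply exp_pos.
  assert (HE1 : Rabs (E - 1) <= 4 * c).
  { replace (E - 1) with ((E - 1 - a) + a) by ring.
    eapply Rle_trans; [apply Rabs_triang|]. nra. }
  assert (HE : E <= 5) by (unfold Rabs in HE1; destruct Rcase_abs in HE1; lra).
  assert (HS : Rabs (sin b) <= 2 * c).
  { replace (sin b) with ((sin b - b) + b) by ring.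
    eapply Rle_trans; [apply Rabs_triang|]. nra. }
  eapply Rle_trans; [apply Cmod_le_Re_Im|]. unfold Cexp; simpl. fold E.
  replace (E * cos b + - (1) + - a) with ((E - 1 - a) + E * (cos b - 1)) by ring.
  replace (E * sin b + - (0) + - b) with ((E - 1) * sin b + (sin b - b)) by ring.
  assert (Hre : Rabs (E * (cos b - 1)) <= 5 * c ^ 2).
  { rewrite Rabs_mult, (Rabs_pos_eq E) by lra.
    apply Rmult_le_compat; try lra; apply Rabs_pos. }
  assert (Him : Rabs ((E - 1) * sin b) <= 8 * c ^ 2).
  { rewrite Rabs_mult. simpl pow.
    apply Rle_trans with (4 * c * (2 * c)); [apply Rmult_le_compat; try apply Rabs_pos; lra | lra]. }
  pose proof (Rabs_triang (E - 1 - a) (E * (cos b - 1))).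
  pose proof (Rabs_triang ((E - 1) * sin b) (sin b - b)).
  lra.
Qed.

Definition Cabs_summable (u : nat -> C) : Prop := ex_series (fun k => Cmod (u k)).

Lemma ex_series_Rabs_le (a b : nat -> R) :
  (forall n, Rabs (a n) <= b n) -> ex_series b -> ex_series a.
Proof. intros H Hb. apply (ex_series_le (V:=R_CompleteNormedModule) a b); auto. Qed.

Lemma Cabs_summable_Re u : Cabs_summable u -> ex_series (fun k => Re (u k)).
Proof. apply ex_series_Rabs_le. intro; apply re_le_Cmod. Qed.

Lemma Cabs_summable_Im u : Cabs_summable u -> ex_series (fun k => Im (u k)).
Proof. apply ex_series_Rabs_le. intro; apply im_le_Cmod. Qed.

Lemma Cabs_summable_le u (b : nat -> R) :
  (forall k, Cmod (u k) <= b k) -> ex_series b -> Cabs_summable u.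
Proof.
  intros H. apply ex_series_Rabs_le. intro n. rewrite Rabs_pos_eq by apply Cmod_ge_0. auto.
Qed.

Lemma Cabs_summable_ext u v : (forall k, u k = v k) -> Cabs_summable u -> Cabs_summable v.
Proof. intro H. apply Cabs_summable_le. intro; rewrite H; lra. Qed.

Lemma Cabs_summable_plus u v :
  Cabs_summable u -> Cabs_summable v -> Cabs_summable (fun k => (u k + v k)%C).
Proof.
  intros Hu Hv. apply Cabs_summable_le with (fun k => Cmod (u k) + Cmod (v k)).
  - intro; apply Cmod_triangle.
  - apply (ex_series_plus (V:=R_NormedModule)); auto.
Qed.

Lemma Cabs_summable_scal c u : Cabs_summable u -> Cabs_summable (fun k => (c * u k)%C).
Proof.
  intro Hu. apply Cabs_summable_le with (fun k => Cmod c * Cmod (u k)).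
  - intro; rewrite Cmod_mult; lra.
  - apply (ex_series_scal (V:=R_NormedModule)); auto.
Qed.

Lemma Cabs_summable_opp u : Cabs_summable u -> Cabs_summable (fun k => (- u k)%C).
Proof. apply Cabs_summable_le. intro; rewrite Cmod_opp; lra. Qed.

Lemma Cabs_summable_minus u v :
  Cabs_summable u -> Cabs_summable v -> Cabs_summable (fun k => (u k - v k)%C).
Proof. intros Hu Hv. apply Cabs_summable_plus, Cabs_summable_opp; auto. Qed.

Lemma CSeries_ext u v : (forall k, u k = v k) -> CSeries u = CSeries v.
Proof. intro H. unfold CSeries. f_equal; apply Series_ext; intro; rewrite H; auto. Qed.

Lemma CSeries_plus u v : Cabs_summable u -> Cabs_summable v ->
  CSeries (fun k => (u k + v k)%C) = (CSeries u + CSeries v)%C.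
Proof.
  intros Hu Hv. unfold CSeries. apply injective_projections; simpl;
    rewrite <- Series_plus; auto using Cabs_summable_Re, Cabs_summable_Im.
Qed.

Lemma CSeries_scal c u : Cabs_summable u -> CSeries (fun k => (c * u k)%C) = (c * CSeries u)%C.
Proof.
  intro Hu. assert (HRe := Cabs_summable_Re u Hu). assert (HIm := Cabs_summable_Im u Hu).
  unfold CSeries. apply injective_projections; simpl; rewrite <- !Series_scal_l.
  - rewrite <- Series_minus; [reflexivity|..]; apply (ex_series_scal (V:=R_NormedModule)); auto.
  - rewrite <- Series_plus; [reflexivity|..]; apply (ex_series_scal (V:=R_NormedModule)); auto.
Qed.

Lemma CSeries_minus u v : Cabs_summable u -> Cabs_summable v ->
  CSeries (fun k => (u k - v k)%C) = (CSeries u - CSeries v)%C.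
Proof.
  intros Hu Hv. unfold Cminus. rewrite CSeries_plus by auto using Cabs_summable_opp.
  rewrite (CSeries_ext (fun k => (- v k)%C) (fun k => (- RtoC 1 * v k)%C)) by (intro; ring).
  rewrite CSeries_scal by auto. ring.
Qed.

Lemma CSeries_incr_1 u :
  Cabs_summable u -> CSeries u = (u 0%nat + CSeries (fun k => u (S k)))%C.
Proof.
  intro Hu. unfold CSeries. apply injective_projections; simpl;
    rewrite Series_incr_1; auto using Cabs_summable_Re, Cabs_summable_Im.
Qed.

Lemma CSeries_incr_1_aux u : u 0%nat = RtoC 0 -> CSeries u = CSeries (fun k => u (S k)).
Proof. intro Hu. unfold CSeries. f_equal; apply Series_incr_1_aux; rewrite Hu; reflexivity. Qed.

Lemma Cmod_CSeries_le u : Cabs_summable u -> Cmod (CSeries u) <= 2 * Series (fun k => Cmod (u k)).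
Proof.
  intro Hu. eapply Rle_trans; [apply Cmod_le_Re_Im|]. unfold CSeries; simpl.
  assert (HRe : ex_series (fun n => Rabs (Re (u n)))).
  { apply ex_series_Rabs_le with (2 := Hu). intro. rewrite Rabs_Rabsolu. apply re_le_Cmod. }
  assert (HIm : ex_series (fun n => Rabs (Im (u n)))).
  { apply ex_series_Rabs_le with (2 := Hu). intro. rewrite Rabs_Rabsolu. apply im_le_Cmod. }
  assert (H1 : Series (fun n => Rabs (Re (u n))) <= Series (fun k => Cmod (u k))).
  { apply Series_le; auto. intro; split; [apply Rabs_pos | apply re_le_Cmod]. }
  assert (H2 : Series (fun n => Rabs (Im (u n))) <= Series (fun k => Cmod (u k))).
  { apply Series_le; auto. intro; split; [apply Rabs_pos | apply im_le_Cmod]. }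
  pose proof (Series_Rabs _ HRe). pose proof (Series_Rabs _ HIm). lra.
Qed.

Definition pser (a : nat -> R) (z : C) : C := CSeries (fun k => (RtoC (a k) * Cpown z k)%C).

Lemma Cmod_Cpown z k : Cmod (Cpown z k) = Cmod z ^ k.
Proof. induction k; simpl; [apply Cmod_1 | rewrite Cmod_mult, IHk; ring]. Qed.

Lemma pser_summable a z : exp_type a -> Cabs_summable (fun k => (RtoC (a k) * Cpown z k)%C).
Proof.
  intros [M [c [HM [Hc Ha]]]].
  apply Cabs_summable_le with (fun k => M * ((c * Cmod z) ^ k / INR (fact k))).
  - intro k. rewrite Cmod_mult, Cmod_R, Cmod_Cpown, Rpow_mult_distr.
    eapply Rle_trans; [apply Rmult_le_compat_r; [apply pow_le, Cmod_ge_0 | apply Ha]|].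
    right. unfold Rdiv. ring.
  - apply (ex_series_scal (V:=R_NormedModule)), ex_series_exp_terms.
Qed.

#[local] Hint Resolve exp_type_J0_coef exp_type_J1_coef exp_type_Y0_coef exp_type_Y1_coef
  exp_type_ZJ1_coef exp_type_ZY1_coef exp_type_S10_coef exp_type_delta0 exp_type_zero
  exp_type_dw exp_type_mulX exp_type_scal exp_type_plus exp_type_minus exp_type_deriv : exp_type.

Notation is_Cderive f w l := (is_derive (K:=C_AbsRing) (V:=C_NormedModule) f w l).

Definition Cdiff_eps (f : C -> C) (z l : C) : Prop :=
  forall eps, 0 < eps -> exists d, 0 < d /\ forall y, Cmod (y - z) < d ->
    Cmod (f y - f z - l * (y - z))%C <= eps * Cmod (y - z).

(* Coquelicot puts two normed-module structures on [C], with different balls;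
   both give the same derivative, characterised by [Cdiff_eps]. *)
Lemma is_Cderive_eps (f : C -> C) (z l : C) : is_Cderive f z l <-> Cdiff_eps f z l.
Proof.
  split.
  - intros [_ H] eps Heps.
    destruct (H z (fun P HP => HP) (mkposreal eps Heps)) as [e He].
    exists e. split; [apply cond_pos|]. intros y Hy.
    specialize (He y (Hy : ball (M:=AbsRing_UniformSpace C_AbsRing) z e y)).
    rewrite (Cmult_comm l). exact He.
  - intro H. split; [apply is_linear_scal_l|]. intros x Hx.
    assert (z = x) by (apply (is_filter_lim_locally_unique (K:=C_AbsRing)
                               (V:=AbsRing_NormedModule C_AbsRing)); exact Hx).
    subst x. intros eps. destruct (H eps (cond_pos eps)) as [d [Hd H1]].
    exists (mkposreal d Hd). intros y Hy.
    change (Cmod (f y - f z - (y - z) * l)%C <= eps * Cmod (y - z)).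
    rewrite (Cmult_comm _ l). apply H1, Hy.
Qed.

Lemma is_Cderive_abs_eps (f : C -> C) (z l : C) :
  is_derive (K:=C_AbsRing) (V:=AbsRing_NormedModule C_AbsRing) f z l <-> Cdiff_eps f z l.
Proof.
  split.
  - intros [_ H] eps Heps.
    destruct (H z (fun P HP => HP) (mkposreal eps Heps)) as [e He].
    exists e. split; [apply cond_pos|]. intros y Hy.
    specialize (He y (Hy : ball (M:=AbsRing_UniformSpace C_AbsRing) z e y)).
    rewrite (Cmult_comm l). exact He.
  - intro H. split; [apply is_linear_scal_l|]. intros x Hx.
    assert (z = x) by (apply (is_filter_lim_locally_unique (K:=C_AbsRing)
                               (V:=AbsRing_NormedModule C_AbsRing)); exact Hx).
    subst x. intros eps. destruct (H eps (cond_pos eps)) as [d [Hd H1]].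
    exists (mkposreal d Hd). intros y Hy.
    change (Cmod (f y - f z - (y - z) * l)%C <= eps * Cmod (y - z)).
    rewrite (Cmult_comm _ l). apply H1, Hy.
Qed.

Lemma is_Cderive_abs (f : C -> C) (z l : C) :
  is_Cderive f z l -> is_derive (K:=C_AbsRing) (V:=AbsRing_NormedModule C_AbsRing) f z l.
Proof. rewrite is_Cderive_eps, is_Cderive_abs_eps. auto. Qed.

Open Scope C_scope.

Lemma is_Cderive_eq (f : C -> C) (w l l' : C) : is_Cderive f w l -> @eq C l l' -> is_Cderive f w l'.
Proof. intros H <-. exact H. Qed.

Lemma is_Cderive_ext (f g : C -> C) w l :
  (forall t, f t = g t) -> is_Cderive f w l -> is_Cderive g w l.
Proof. apply is_derive_ext. Qed.

Lemma is_Cderive_const (c : C) w : is_Cderive (fun _ => c) w (RtoC 0).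
Proof. apply (is_derive_const (K:=C_AbsRing) (V:=C_NormedModule)). Qed.

Lemma is_Cderive_id (w : C) : is_Cderive (fun t => t) w (RtoC 1).
Proof.
  apply is_Cderive_eps. intros eps Heps. exists 1%R. split; [lra|]. intros y Hy.
  replace (y - w - 1 * (y - w)) with (RtoC 0) by ring. rewrite Cmod_0.
  pose proof (Cmod_ge_0 (y - w)). nra.
Qed.

Lemma is_Cderive_plus f g w df dg :
  is_Cderive f w df -> is_Cderive g w dg -> is_Cderive (fun t => f t + g t) w (df + dg).
Proof. apply (is_derive_plus (K:=C_AbsRing) (V:=C_NormedModule)). Qed.

Lemma is_Cderive_opp f w df : is_Cderive f w df -> is_Cderive (fun t => - f t) w (- df).
Proof. apply (is_derive_opp (K:=C_AbsRing) (V:=C_NormedModule)). Qed.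

Lemma is_Cderive_minus f g w df dg :
  is_Cderive f w df -> is_Cderive g w dg -> is_Cderive (fun t => f t - g t) w (df - dg).
Proof. intros H1 H2. apply is_Cderive_plus; [|apply is_Cderive_opp]; auto. Qed.

Lemma is_Cderive_mult f g w df dg : is_Cderive f w df -> is_Cderive g w dg ->
  is_Cderive (fun t => f t * g t) w (df * g w + f w * dg).
Proof.
  intros H1 H2. apply is_Cderive_eps, is_Cderive_abs_eps.
  apply (is_derive_mult (K:=C_AbsRing)); [apply is_Cderive_abs.. | exact Cmult_comm]; auto.
Qed.

Lemma is_Cderive_scal (c : C) f w df :
  is_Cderive f w df -> is_Cderive (fun t => c * f t) w (c * df).
Proof.
  intro H. eapply is_Cderive_eq; [apply (is_Cderive_mult (fun _ => c) f), H; apply is_Cderive_const|].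
  ring.
Qed.

Lemma is_Cderive_comp (f g : C -> C) (w df dg : C) :
  is_Cderive f (g w) df -> is_Cderive g w dg -> is_Cderive (fun t => f (g t)) w (dg * df).
Proof.
  intros H1 H2. apply (is_derive_comp (K:=C_AbsRing) (V:=C_NormedModule)); auto.
  apply is_Cderive_abs, H2.
Qed.

Lemma is_Cderive_Cexp w : is_Cderive Cexp w (Cexp w).
Proof.
  apply is_Cderive_eps. intros eps Heps.
  set (M := Cmod (Cexp w)). assert (HM : (0 <= M)%R) by apply Cmod_ge_0.
  exists (Rmin 1 (eps / (17 * M + 1))). split; [apply Rmin_pos; [lra | apply Rdiv_lt_0_compat; lra]|].
  intros y Hy. set (h := y - w) in *.
  replace (Cexp y - Cexp w - Cexp w * h) with (Cexp w * (Cexp h - 1 - h))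
    by (replace y with (w + h) by (unfold h; ring); rewrite Cexp_add; ring).
  rewrite Cmod_mult. fold M.
  assert (H1 : (Cmod h <= 1)%R) by (apply Rlt_le, Rlt_le_trans with (1 := Hy), Rmin_l).
  assert (H2 : (Cmod h * (17 * M + 1) <= eps)%R).
  { apply Rle_trans with (eps / (17 * M + 1) * (17 * M + 1))%R.
    - apply Rmult_le_compat_r; [lra|]. apply Rlt_le, Rlt_le_trans with (1 := Hy), Rmin_r.
    - right. field. lra. }
  assert (H3 := Cexp_taylor2 h H1). pose proof (Cmod_ge_0 h).
  apply Rle_trans with (M * (17 * Cmod h ^ 2))%R; [apply Rmult_le_compat_l; auto|].
  simpl. nra.
Qed.

Lemma pser_ext a b z : (forall k, a k = b k) -> pser a z = pser b z.
Proof. intro H. apply CSeries_ext. intro k. rewrite H. reflexivity. Qed.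

Lemma pser_plus a b z : exp_type a -> exp_type b ->
  pser (fun k => (a k + b k)%R) z = pser a z + pser b z.
Proof.
  intros Ha Hb. unfold pser. rewrite <- CSeries_plus by auto using pser_summable.
  apply CSeries_ext. intro k. rewrite RtoC_plus. ring.
Qed.

Lemma pser_scal x a z : exp_type a -> pser (fun k => (x * a k)%R) z = RtoC x * pser a z.
Proof.
  intro Ha. unfold pser. rewrite <- CSeries_scal by auto using pser_summable.
  apply CSeries_ext. intro k. rewrite RtoC_mult. ring.
Qed.

Lemma pser_minus a b z : exp_type a -> exp_type b ->
  pser (fun k => (a k - b k)%R) z = pser a z - pser b z.
Proof.
  intros Ha Hb. unfold pser. rewrite <- CSeries_minus by auto using pser_summable.
  apply CSeries_ext. intro k. rewrite RtoC_minus. ring.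
Qed.

Lemma pser_mulX a z : exp_type a -> pser (coef_mulX a) z = z * pser a z.
Proof.
  intro Ha. unfold pser. rewrite CSeries_incr_1_aux by (simpl; ring).
  rewrite <- CSeries_scal by auto using pser_summable.
  apply CSeries_ext. intro k. simpl. ring.
Qed.

Lemma pser_zero z : pser (fun _ => 0%R) z = 0.
Proof.
  rewrite (pser_ext _ (fun k => (0 * 0)%R)) by (intro; ring).
  rewrite pser_scal by auto with exp_type. ring.
Qed.

Lemma pser_delta0 z : pser delta0 z = 1.
Proof.
  unfold pser. rewrite CSeries_incr_1 by auto using pser_summable, exp_type_delta0.
  rewrite (CSeries_ext _ (fun k => RtoC 0 * Cpown z k)) by (intro; simpl; ring).
  fold (pser (fun _ => 0%R) z). rewrite pser_zero. simpl. ring.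
Qed.

Definition pow_remainder (y z : C) (k : nat) : C :=
  Cpown y k - Cpown z k - RtoC (INR k) * Cpown z (pred k) * (y - z).

Lemma pow_remainder_bound y z r k : (Cmod y <= r)%R -> (Cmod z <= r)%R -> (1 <= r)%R ->
  (Cmod (pow_remainder y z k) <= INR k ^ 2 * r ^ k * Cmod (y - z) ^ 2)%R.
Proof.
  intros Hy Hz Hr. induction k.
  - unfold pow_remainder. simpl. replace (1 - 1 - 0 * 1 * (y - z)) with (RtoC 0) by ring.
    rewrite Cmod_0. lra.
  - replace (pow_remainder y z (S k))
      with (y * pow_remainder y z k + RtoC (INR k) * Cpown z (pred k) * (y - z) * (y - z))
      by (unfold pow_remainder; destruct k; [simpl; ring|];
          cbn [pred Cpown]; rewrite (S_INR (S k)), RtoC_plus; ring).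
    eapply Rle_trans; [apply Cmod_triangle|].
    rewrite !Cmod_mult, Cmod_R, Rabs_pos_eq, Cmod_Cpown by apply pos_INR.
    set (h := Cmod (y - z)). assert (Hh : (0 <= h)%R) by apply Cmod_ge_0.
    assert (Hk : (0 <= INR k)%R) by apply pos_INR.
    assert (HzR : (Cmod z ^ pred k <= r ^ S k)%R).
    { apply Rle_trans with (r ^ pred k)%R; [apply pow_incr; split; auto; apply Cmod_ge_0|].
      apply Rle_pow; auto; lia. }
    assert (HRk : (0 <= r ^ k)%R) by (apply pow_le; lra).
    assert (H1 : (Cmod y * Cmod (pow_remainder y z k) <= r * (INR k ^ 2 * r ^ k * h ^ 2))%R)
      by (apply Rmult_le_compat; auto; apply Cmod_ge_0).
    assert (H2 : (INR k * Cmod z ^ pred k * h * h <= INR k * r ^ S k * h * h)%R)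
      by (repeat apply Rmult_le_compat_r; auto; apply Rmult_le_compat_l; auto).
    rewrite S_INR. simpl pow in *.
    assert (HT : (0 <= r * r ^ k * (h * h))%R)
      by (apply Rmult_le_pos; [apply Rmult_le_pos; lra | nra]).
    assert ((INR k * INR k + INR k) * (r * r ^ k * (h * h))
            <= (INR k + 1) * (INR k + 1) * (r * r ^ k * (h * h)))%R
      by (apply Rmult_le_compat_r; nra).
    nra.
Qed.

Lemma pser_remainder a y z : exp_type a ->
  pser a y - pser a z - pser (coef_deriv a) z * (y - z)
  = CSeries (fun k => RtoC (a k) * pow_remainder y z k).
Proof.
  intro Ha.
  assert (Hd : pser (coef_deriv a) z
               = CSeries (fun k => RtoC (INR k) * RtoC (a k) * Cpown z (pred k))).
  { symmetry. rewrite CSeries_incr_1_aux by (simpl; ring).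
    apply CSeries_ext. intro k. unfold coef_deriv. rewrite RtoC_mult. simpl pred. ring. }
  assert (Hsd : Cabs_summable (fun k => RtoC (INR k) * RtoC (a k) * Cpown z (pred k))).
  { apply (ex_series_incr_1 (V:=R_NormedModule)).
    apply Cabs_summable_ext with (fun k => RtoC (coef_deriv a k) * Cpown z k).
    - intro k. unfold coef_deriv. rewrite RtoC_mult. simpl pred. ring.
    - apply pser_summable, exp_type_deriv, Ha. }
  rewrite Hd. unfold pser.
  rewrite <- CSeries_minus, Cmult_comm, <- CSeries_scal, <- CSeries_minus;
    auto using pser_summable, Cabs_summable_minus, Cabs_summable_scal.
  apply CSeries_ext. intro k. unfold pow_remainder. ring.
Qed.

Lemma pser_remainder_term_le a M c r y z k : (0 <= M)%R -> (0 <= c)%R ->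
  (Rabs (a k) <= M * c ^ k / INR (fact k))%R ->
  (Cmod y <= r)%R -> (Cmod z <= r)%R -> (1 <= r)%R ->
  (Cmod (RtoC (a k) * pow_remainder y z k)
   <= M * ((4 * c * r) ^ k / INR (fact k)) * Cmod (y - z) ^ 2)%R.
Proof.
  intros HM Hc Hak Hy Hz Hr. rewrite Cmod_mult, Cmod_R.
  assert (HE := pow_remainder_bound y z r k Hy Hz Hr). set (h := Cmod (y - z)) in *.
  pose proof (fact_pos k). pose proof (INR_sqr_le_pow4 k). pose proof (Cmod_ge_0 (y - z)).
  assert (0 <= M * c ^ k / INR (fact k) * (r ^ k * h ^ 2))%R.
  { apply Rmult_le_pos; [apply Rdiv_le_0_compat; [apply Rmult_le_pos, pow_le|]|
                        apply Rmult_le_pos; apply pow_le]; auto; lra. }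
  apply Rle_trans with (M * c ^ k / INR (fact k) * (INR k ^ 2 * r ^ k * h ^ 2))%R;
    [apply Rmult_le_compat; auto using Rabs_pos, Cmod_ge_0|].
  rewrite !Rpow_mult_distr.
  replace (M * c ^ k / INR (fact k) * (INR k ^ 2 * r ^ k * h ^ 2))%R
    with (INR k ^ 2 * (M * c ^ k / INR (fact k) * (r ^ k * h ^ 2)))%R by ring.
  replace (M * (4 ^ k * c ^ k * r ^ k / INR (fact k)) * h ^ 2)%R
    with (4 ^ k * (M * c ^ k / INR (fact k) * (r ^ k * h ^ 2)))%R by (unfold Rdiv; ring).
  apply Rmult_le_compat_r; auto.
Qed.

Lemma pser_remainder_le a M c r y z : (0 <= M)%R -> (0 <= c)%R ->
  (forall k, Rabs (a k) <= M * c ^ k / INR (fact k))%R ->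
  (Cmod y <= r)%R -> (Cmod z <= r)%R -> (1 <= r)%R ->
  (Cmod (pser a y - pser a z - pser (coef_deriv a) z * (y - z))
   <= 2 * Series (fun k => M * ((4 * c * r) ^ k / INR (fact k))) * Cmod (y - z) ^ 2)%R.
Proof.
  intros HM Hc Hak Hy Hz Hr.
  set (b := fun k => (M * ((4 * c * r) ^ k / INR (fact k)))%R).
  assert (Hb : ex_series (fun k => b k * Cmod (y - z) ^ 2)%R)
    by apply ex_series_scal_r, (ex_series_scal (V:=R_NormedModule)), ex_series_exp_terms.
  assert (Hterm : forall k, (Cmod (RtoC (a k) * pow_remainder y z k) <= b k * Cmod (y - z) ^ 2)%R)
    by (intro k; apply pser_remainder_term_le; auto).
  rewrite pser_remainder by (exists M, c; auto).
  eapply Rle_trans; [apply Cmod_CSeries_le, (Cabs_summable_le _ _ Hterm Hb)|].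
  rewrite Rmult_assoc, <- Series_scal_r. apply Rmult_le_compat_l; [lra|].
  apply Series_le; auto. intro k; split; [apply Cmod_ge_0 | auto].
Qed.

Lemma is_Cderive_pser a z : exp_type a -> is_Cderive (pser a) z (pser (coef_deriv a) z).
Proof.
  intros [M [c [HM [Hc Hak]]]].
  set (r := (Cmod z + 1)%R). assert (Hr : (1 <= r)%R) by (pose proof (Cmod_ge_0 z); unfold r; lra).
  set (S := Series (fun k => M * ((4 * c * r) ^ k / INR (fact k)))%R).
  assert (HS : (0 <= S)%R).
  { apply Series_nonneg; [|apply (ex_series_scal (V:=R_NormedModule)), ex_series_exp_terms].
    intro k. pose proof (fact_pos k).
    apply Rmult_le_pos; [auto|]. apply Rdiv_le_0_compat; [apply pow_le; nra | auto]. }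
  apply is_Cderive_eps. intros eps Heps.
  exists (Rmin 1 (eps / (2 * S + 1))).
  split; [apply Rmin_pos; [lra | apply Rdiv_lt_0_compat; lra]|]. intros y Hy.
  assert (Hyr : (Cmod y <= r)%R).
  { replace y with (z + (y - z)) by ring. eapply Rle_trans; [apply Cmod_triangle|].
    pose proof (Rmin_l 1 (eps / (2 * S + 1))). unfold r; lra. }
  eapply Rle_trans; [apply (pser_remainder_le a M c r); auto; unfold r; lra|]. fold S.
  assert (Heps' : (Cmod (y - z) * (2 * S + 1) <= eps)%R).
  { apply Rle_trans with (eps / (2 * S + 1) * (2 * S + 1))%R.
    - apply Rmult_le_compat_r; [lra|]. apply Rlt_le, Rlt_le_trans with (1 := Hy), Rmin_r.
    - right. field. lra. }
  assert (Hh1 : (Cmod (y - z) <= 1)%R) by (apply Rlt_le, Rlt_le_trans with (1 := Hy), Rmin_l).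
  pose proof (Cmod_ge_0 (y - z)). simpl pow. nra.
Qed.

Definition half_zeta_sq (w : C) : C := (Cexp w / RtoC 2) * (Cexp w / RtoC 2).

Lemma Cexp_sq w : Cexp w * Cexp w = RtoC 4 * half_zeta_sq w.
Proof. unfold half_zeta_sq. field. Qed.

Lemma is_Cderive_half_zeta_sq w : is_Cderive half_zeta_sq w (RtoC 2 * half_zeta_sq w).
Proof.
  unfold half_zeta_sq, Cdiv. eapply is_Cderive_eq.
  - apply is_Cderive_mult; apply (is_Cderive_mult Cexp (fun _ => / RtoC 2));
      auto using is_Cderive_Cexp, is_Cderive_const.
  - cbv beta. field.
Qed.

Lemma is_Cderive_pser_half_zeta_sq a w : exp_type a ->
  is_Cderive (fun t => pser a (half_zeta_sq t)) w (pser (coef_dw a) (half_zeta_sq w)).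
Proof.
  intro Ha. eapply is_Cderive_eq.
  - apply (is_Cderive_comp (pser a) half_zeta_sq);
      [apply is_Cderive_pser, Ha | apply is_Cderive_half_zeta_sq].
  - rewrite (pser_ext (coef_dw a) (fun k => 2 * coef_mulX (coef_deriv a) k)%R)
      by (intros [|k]; unfold coef_dw, coef_mulX, coef_deriv; simpl; ring).
    rewrite pser_scal, pser_mulX by auto with exp_type. ring.
Qed.

Lemma Cpown_double z k : Cpown z (2 * k) = Cpown (z * z) k.
Proof.
  induction k; [reflexivity|].
  replace (2 * S k)%nat with (S (S (2 * k))) by lia. cbn [Cpown]. rewrite <- IHk. ring.
Qed.

Lemma RtoC_fact_neq0 k : RtoC (INR (fact k)) <> 0.
Proof. intro H. apply RtoC_inj in H. pose proof (fact_pos k). lra. Qed.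

Lemma J0_term w k : RtoC ((-1) ^ k) * Cpown (Cexp w / RtoC 2) (2 * k) / (kf k * kf k)
  = RtoC (J0_coef k) * Cpown (half_zeta_sq w) k.
Proof.
  rewrite Cpown_double. unfold half_zeta_sq, J0_coef, kf.
  rewrite RtoC_div, RtoC_mult; [field; apply RtoC_fact_neq0|].
  pose proof (fact_pos k). nra.
Qed.

Lemma J1_term w k : RtoC ((-1) ^ k) * Cpown (Cexp w / RtoC 2) (2 * k + 1) / (kf k * kf (k + 1))
  = (Cexp w / RtoC 2) * (RtoC (J1_coef k) * Cpown (half_zeta_sq w) k).
Proof.
  replace (2 * k + 1)%nat with (S (2 * k)) by lia. cbn [Cpown]. rewrite Cpown_double.
  unfold half_zeta_sq, J1_coef, kf. rewrite Nat.add_1_r.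
  rewrite RtoC_div, RtoC_mult; [field; split; apply RtoC_fact_neq0|].
  pose proof (fact_pos k). pose proof (fact_pos (S k)). nra.
Qed.

Lemma J0_pser w : J0 w = pser J0_coef (half_zeta_sq w).
Proof. apply CSeries_ext. intro k. apply J0_term. Qed.

Lemma J1_pser w : J1 w = (Cexp w / RtoC 2) * pser J1_coef (half_zeta_sq w).
Proof.
  unfold J1, pser. rewrite <- CSeries_scal by auto using pser_summable with exp_type.
  apply CSeries_ext. intro k. apply J1_term.
Qed.

Lemma ZJ1_pser w : Cexp w * J1 w = pser ZJ1_coef (half_zeta_sq w).
Proof.
  rewrite J1_pser. unfold ZJ1_coef. rewrite pser_mulX, pser_scal by auto with exp_type.
  unfold half_zeta_sq. field.
Qed.

Lemma Y0_pser w : Y0 w = RtoC (2 / PI) *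
  ((w - RtoC (ln 2)) * pser J0_coef (half_zeta_sq w) - pser Y0_coef (half_zeta_sq w)).
Proof.
  unfold Y0, pser. f_equal.
  rewrite <- CSeries_scal, <- CSeries_minus by
    auto using pser_summable, Cabs_summable_scal with exp_type.
  apply CSeries_ext. intro k. rewrite J0_term. unfold Y0_coef. rewrite RtoC_mult. ring.
Qed.

Lemma ZY1_pser w : Cexp w * Y1 w =
  - RtoC (2 / PI) + RtoC (2 / PI) * (w - RtoC (ln 2)) * pser ZJ1_coef (half_zeta_sq w)
  - RtoC (1 / PI) * pser ZY1_coef (half_zeta_sq w).
Proof.
  unfold Y1. rewrite <- ZJ1_pser.
  assert (Hs : CSeries (fun k => RtoC ((-1) ^ k) * RtoC (psi1 k + psi1 (k + 1))
                                  * Cpown (Cexp w / RtoC 2) (2 * k + 1) / (kf k * kf (k + 1)))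
               = (Cexp w / RtoC 2) * pser Y1_coef (half_zeta_sq w)).
  { unfold pser. rewrite <- CSeries_scal by auto using pser_summable with exp_type.
    apply CSeries_ext. intro k.
    transitivity (RtoC (psi1 k + psi1 (k + 1)) * (RtoC ((-1) ^ k)
                  * Cpown (Cexp w / RtoC 2) (2 * k + 1) / (kf k * kf (k + 1)))); [unfold Cdiv; ring|].
    rewrite J1_term. unfold Y1_coef. rewrite Nat.add_1_r, RtoC_mult. ring. }
  rewrite Hs. unfold ZY1_coef. rewrite pser_mulX, pser_scal by auto with exp_type.
  assert (Hz := Cexp_neq0 w). unfold half_zeta_sq. field. auto.
Qed.

Lemma S10_pser w : S10 w = RtoC (1 / 2) *
  ((w - RtoC (ln 2)) * (w - RtoC (ln 2)) * pser J0_coef (half_zeta_sq w)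
   - RtoC 2 * (w - RtoC (ln 2)) * pser Y0_coef (half_zeta_sq w)
   + pser S10_coef (half_zeta_sq w)).
Proof.
  unfold S10, pser. f_equal.
  rewrite <- !CSeries_scal, <- CSeries_minus, <- CSeries_plus
    by auto using pser_summable, Cabs_summable_scal, Cabs_summable_minus with exp_type.
  apply CSeries_ext. intro k. rewrite J0_term. unfold Y0_coef, S10_coef.
  rewrite !RtoC_mult, RtoC_plus, RtoC_minus, RtoC_pow. ring.
Qed.

Lemma Ceq_lin_comb (A B L R k : C) : A = B -> L - R = k * (A - B) -> L = R.
Proof.
  intros -> H. replace (B - B) with (RtoC 0) in H by ring.
  replace L with (L - R + R) by ring. rewrite H. ring.
Qed.

Lemma pser_opp a z : exp_type a -> pser (fun k => (- a k)%R) z = - pser a z.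
Proof.
  intro Ha. rewrite (pser_ext _ (fun k => (0 - a k)%R)) by (intro; ring).
  rewrite pser_minus, pser_zero by auto with exp_type. ring.
Qed.

Lemma pser_dw_J0 z : pser (coef_dw J0_coef) z = - pser ZJ1_coef z.
Proof. rewrite (pser_ext _ _ _ coef_dw_J0), pser_opp by auto with exp_type. reflexivity. Qed.

Lemma pser_dw_Y0 z :
  RtoC 2 * pser (coef_dw Y0_coef) z = RtoC 2 * pser J0_coef z - RtoC 2 - pser ZY1_coef z.
Proof.
  assert (H := pser_ext _ _ z coef_dw_Y0).
  rewrite !pser_minus, !pser_scal, pser_delta0 in H by auto with exp_type.
  apply (Ceq_lin_comb _ _ _ _ (- RtoC 1) H). ring.
Qed.

Lemma pser_dw_ZJ1 z : pser (coef_dw ZJ1_coef) z = RtoC 4 * (z * pser J0_coef z).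
Proof.
  rewrite (pser_ext _ _ _ coef_dw_ZJ1), pser_mulX, pser_scal by auto with exp_type. ring.
Qed.

Lemma pser_dw_ZY1 z : pser (coef_dw ZY1_coef) z
  = RtoC 2 * pser ZJ1_coef z + RtoC 8 * (z * pser Y0_coef z).
Proof.
  assert (H := pser_ext _ _ z coef_dw_ZY1).
  rewrite !pser_plus, !pser_minus, !pser_scal, pser_mulX, pser_scal, pser_zero in H
    by auto with exp_type.
  replace (RtoC 8) with (RtoC 2 * RtoC 4) by (rewrite <- RtoC_mult; f_equal; ring).
  apply (Ceq_lin_comb _ _ _ _ (- RtoC 1) H). ring.
Qed.

Lemma pser_dw2_J0 z : pser (coef_dw (coef_dw J0_coef)) z = - RtoC 4 * (z * pser J0_coef z).
Proof.
  rewrite (pser_ext _ _ _ coef_dw2_J0), pser_scal, pser_mulX by auto with exp_type.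
  rewrite <- RtoC_opp. f_equal.
Qed.

Lemma pser_dw2_Y0 z : pser (coef_dw (coef_dw Y0_coef)) z
  = RtoC 2 * pser (coef_dw J0_coef) z - RtoC 4 * (z * pser Y0_coef z).
Proof.
  assert (H := pser_ext _ _ z coef_dw2_Y0).
  rewrite pser_minus, !pser_scal, pser_mulX in H by auto with exp_type.
  apply (Ceq_lin_comb _ _ _ _ (- RtoC 1) H). ring.
Qed.

Lemma pser_dw2_S10 z : pser (coef_dw (coef_dw S10_coef)) z
  = RtoC 2 - RtoC 2 * pser J0_coef z + RtoC 4 * pser (coef_dw Y0_coef) z
    - RtoC 4 * (z * pser S10_coef z).
Proof.
  assert (H := pser_ext _ _ z coef_dw2_S10).
  rewrite !pser_plus, pser_minus, !pser_scal, pser_mulX, pser_delta0 in H by auto with exp_type.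
  apply (Ceq_lin_comb _ _ _ _ (RtoC 1) H). ring.
Qed.

(** * The Bessel and Lommel differential equations in the variable [w = log zeta] *)

Ltac Cderive_step :=
  match goal with
  | |- is_derive (fun t => pser ?a (half_zeta_sq t)) _ _ =>
      apply is_Cderive_pser_half_zeta_sq; auto with exp_type
  | |- is_derive Cexp _ _ => apply is_Cderive_Cexp
  | |- is_derive (fun t => Cexp t) _ _ => apply is_Cderive_Cexp
  | |- is_derive (fun t => t) _ _ => apply is_Cderive_id
  | |- is_derive (fun t => Cplus (@?f t) (@?g t)) _ _ => apply (is_Cderive_plus f g)
  | |- is_derive (fun t => Cminus (@?f t) (@?g t)) _ _ => apply (is_Cderive_minus f g)
  | |- is_derive (fun t => Copp (@?f t)) _ _ => apply (is_Cderive_opp f)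
  | |- is_derive (fun t => Cmult (@?f t) (@?g t)) _ _ => apply (is_Cderive_mult f g)
  | |- is_derive (fun _ => ?c) _ _ => apply (is_Cderive_const c)
  end.

Ltac Cderive := eapply is_Cderive_eq; [repeat Cderive_step|].

Lemma PI_neq0 : PI <> 0%R.
Proof. pose proof PI_RGT_0. lra. Qed.

Lemma RtoC_2_div_PI : RtoC (2 / PI) = RtoC 2 * RtoC (1 / PI).
Proof. rewrite <- RtoC_mult. f_equal. field. apply PI_neq0. Qed.

Lemma is_Cderive_J0 w : is_Cderive J0 w (- (Cexp w * J1 w)).
Proof.
  apply is_Cderive_ext with (fun t => pser J0_coef (half_zeta_sq t)); [intro; rewrite J0_pser; auto|].
  Cderive. rewrite ZJ1_pser, pser_dw_J0. ring.
Qed.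

Lemma is_Cderive_Y0 w : is_Cderive Y0 w (- (Cexp w * Y1 w)).
Proof.
  apply is_Cderive_ext with (fun t => RtoC (2 / PI) * ((t - RtoC (ln 2))
    * pser J0_coef (half_zeta_sq t) - pser Y0_coef (half_zeta_sq t))); [intro; rewrite Y0_pser; auto|].
  Cderive. rewrite ZY1_pser, pser_dw_J0, RtoC_2_div_PI.
  apply (Ceq_lin_comb _ _ _ _ (- RtoC (1 / PI)) (pser_dw_Y0 (half_zeta_sq w))). ring.
Qed.

Lemma is_Cderive_ZJ1 w : is_Cderive (fun t => Cexp t * J1 t) w (Cexp w * Cexp w * J0 w).
Proof.
  apply is_Cderive_ext with (fun t => pser ZJ1_coef (half_zeta_sq t)); [intro; rewrite ZJ1_pser; auto|].
  Cderive. rewrite pser_dw_ZJ1, Cexp_sq, J0_pser. ring.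
Qed.

Lemma is_Cderive_ZY1 w : is_Cderive (fun t => Cexp t * Y1 t) w (Cexp w * Cexp w * Y0 w).
Proof.
  apply is_Cderive_ext with (fun t => - RtoC (2 / PI) + RtoC (2 / PI) * (t - RtoC (ln 2))
    * pser ZJ1_coef (half_zeta_sq t) - RtoC (1 / PI) * pser ZY1_coef (half_zeta_sq t));
    [intro; rewrite ZY1_pser; auto|].
  Cderive. rewrite pser_dw_ZJ1, pser_dw_ZY1, Cexp_sq, Y0_pser, RtoC_2_div_PI.
  replace (RtoC 8) with (RtoC 2 * RtoC 4) by (rewrite <- RtoC_mult; f_equal; ring). ring.
Qed.

(* [d/dw S_{-1,0}], i.e. [zeta S'_{-1,0}(zeta)] *)
Definition S10_dw (w : C) : C := RtoC (1 / 2) *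
  (RtoC 2 * (w - RtoC (ln 2)) * pser J0_coef (half_zeta_sq w)
   + (w - RtoC (ln 2)) * (w - RtoC (ln 2)) * pser (coef_dw J0_coef) (half_zeta_sq w)
   - RtoC 2 * pser Y0_coef (half_zeta_sq w)
   - RtoC 2 * (w - RtoC (ln 2)) * pser (coef_dw Y0_coef) (half_zeta_sq w)
   + pser (coef_dw S10_coef) (half_zeta_sq w)).

Lemma is_Cderive_S10 w : is_Cderive S10 w (S10_dw w).
Proof.
  apply is_Cderive_ext with (fun t => RtoC (1 / 2) *
    ((t - RtoC (ln 2)) * (t - RtoC (ln 2)) * pser J0_coef (half_zeta_sq t)
     - RtoC 2 * (t - RtoC (ln 2)) * pser Y0_coef (half_zeta_sq t)
     + pser S10_coef (half_zeta_sq t))); [intro; rewrite S10_pser; auto|].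
  Cderive. unfold S10_dw. ring.
Qed.

Lemma is_Cderive_S10_dw w : is_Cderive S10_dw w (RtoC 1 - Cexp w * Cexp w * S10 w).
Proof.
  unfold S10_dw at 1. Cderive.
  rewrite Cexp_sq, S10_pser, pser_dw2_J0, pser_dw2_Y0, pser_dw2_S10.
  replace (RtoC (1 / 2)) with (/ RtoC 2) by (rewrite RtoC_div by lra; field).
  field.
Qed.

Lemma Cmod_diff_lower_bound (c : C -> C) w dc : is_Cderive c w dc -> dc <> RtoC 0 ->
  exists d, (0 < d)%R /\ forall w', (Cmod (w' - w) < d)%R ->
    (Cmod dc * Cmod (w' - w) / 2 <= Cmod (c w' - c w))%R.
Proof.
  intros Hc Hdc. assert (HA : (0 < Cmod dc)%R) by (apply Cmod_gt_0, Hdc).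
  destruct (proj1 (is_Cderive_eps c w dc) Hc (Cmod dc / 2)%R ltac:(lra)) as [d [Hd H]].
  exists d. split; auto. intros w' Hw'. specialize (H w' Hw').
  assert (Cmod (dc * (w' - w)) <= Cmod (c w' - c w) + Cmod (c w' - c w - dc * (w' - w)))%R.
  { replace (dc * (w' - w)) with ((c w' - c w) - (c w' - c w - dc * (w' - w))) at 1 by ring.
    eapply Rle_trans; [apply Cmod_triangle|]. rewrite Cmod_opp. lra. }
  rewrite Cmod_mult in H0. lra.
Qed.

Lemma has_coord_deriv_of_is_Cderive (c f : C -> C) (w l dc : C) :
  is_Cderive f w l -> is_Cderive c w dc -> dc <> RtoC 0 -> has_coord_deriv c f w (l / dc).
Proof.
  intros Hf Hc Hdc eps Heps.
  set (A := Cmod dc). set (B := Cmod l).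
  assert (HA : (0 < A)%R) by (apply Cmod_gt_0, Hdc).
  assert (HB : (0 <= B)%R) by apply Cmod_ge_0.
  set (e1 := (eps * A / 8)%R). set (e2 := (eps * A * A / (8 * (B + 1)))%R).
  assert (He1 : (0 < e1)%R) by (unfold e1; apply Rdiv_lt_0_compat; [apply Rmult_lt_0_compat|]; lra).
  assert (He2 : (0 < e2)%R)
    by (unfold e2; apply Rdiv_lt_0_compat; [apply Rmult_lt_0_compat; [apply Rmult_lt_0_compat|]|]; lra).
  destruct (proj1 (is_Cderive_eps f w l) Hf e1 He1) as [d1 [Hd1 H1]].
  destruct (proj1 (is_Cderive_eps c w dc) Hc e2 He2) as [d2 [Hd2 H2]].
  destruct (Cmod_diff_lower_bound c w dc Hc Hdc) as [d3 [Hd3 H3]].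
  exists (Rmin d1 (Rmin d2 d3)). split; [apply Rmin_pos; [|apply Rmin_pos]; auto|].
  intros w' [Hw0 Hw1]. set (h := w' - w) in *.
  specialize (H1 w' ltac:(apply Rlt_le_trans with (1 := Hw1), Rmin_l)).
  specialize (H2 w' ltac:(apply Rlt_le_trans with (1 := Hw1); eapply Rle_trans; apply Rmin_r || apply Rmin_l)).
  specialize (H3 w' ltac:(apply Rlt_le_trans with (1 := Hw1); eapply Rle_trans; apply Rmin_r)).
  fold h A in H1, H2, H3.
  set (Df := f w' - f w) in *. set (Dc := c w' - c w) in *.
  assert (HDc : (0 < Cmod Dc)%R) by (apply Rlt_le_trans with (2 := H3); apply Rdiv_lt_0_compat; [apply Rmult_lt_0_compat|]; lra).
  assert (HDc0 : Dc <> 0) by (intro E; rewrite E, Cmod_0 in HDc; lra).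
  replace (Df / Dc - l / dc) with ((dc * (Df - l * h) - l * (Dc - dc * h)) / (dc * Dc))
    by (field; split; auto).
  rewrite Cmod_div, Cmod_mult by (apply Cmult_neq_0; auto). fold A.
  assert (Hnum : (Cmod (dc * (Df - l * h) - l * (Dc - dc * h)) <= A * (e1 * Cmod h) + B * (e2 * Cmod h))%R).
  { unfold Cminus at 1. eapply Rle_trans; [apply Cmod_triangle|]. rewrite Cmod_opp, !Cmod_mult.
    apply Rplus_le_compat; apply Rmult_le_compat_l; auto; lra. }
  apply Rle_lt_trans with ((A * (e1 * Cmod h) + B * (e2 * Cmod h)) / (A * (A * Cmod h / 2)))%R.
  { unfold Rdiv. apply Rmult_le_compat; auto using Cmod_ge_0.
    - left. apply Rinv_0_lt_compat, Rmult_lt_0_compat; lra.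
    - apply Rinv_le_contravar; [apply Rmult_lt_0_compat; [|apply Rdiv_lt_0_compat]; [|apply Rmult_lt_0_compat|]; lra|].
      apply Rmult_le_compat_l; lra. }
  replace ((A * (e1 * Cmod h) + B * (e2 * Cmod h)) / (A * (A * Cmod h / 2)))%R
    with ((2 * (A * e1 + B * e2)) / (A * A))%R by (field; lra).
  assert (HBe2 : (B * e2 <= eps * A * A / 8)%R).
  { unfold e2. apply Rle_trans with ((B + 1) * (eps * A * A / (8 * (B + 1))))%R.
    - apply Rmult_le_compat_r; [left; exact He2 | lra].
    - right. field. lra. }
  apply Rmult_lt_reg_r with (A * A)%R; [nra|].
  unfold Rdiv. rewrite Rmult_assoc, Rinv_l, Rmult_1_r by nra. unfold e1.
  assert (0 < eps * (A * A))%R by (apply Rmult_lt_0_compat; nra). nra.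
Qed.

Lemma has_coord_deriv_unique (c f : C -> C) w l1 l2 :
  has_coord_deriv c f w l1 -> has_coord_deriv c f w l2 -> l1 = l2.
Proof.
  intros H1 H2. destruct (Ceq_dec l1 l2) as [E|E]; auto. exfalso.
  set (d := Cmod (l1 - l2)).
  assert (Hd : (0 < d)%R) by (apply Cmod_gt_0; intro H; apply E;
    replace l1 with (l1 - l2 + l2) by ring; rewrite H; ring).
  destruct (H1 (d / 2)%R ltac:(lra)) as [d1 [Hd1 K1]].
  destruct (H2 (d / 2)%R ltac:(lra)) as [d2 [Hd2 K2]].
  set (r := (Rmin d1 d2 / 2)%R).
  assert (Hr : (0 < r)%R) by (unfold r; apply Rdiv_lt_0_compat; [apply Rmin_pos|]; lra).
  assert (Hr1 : (r < d1)%R) by (unfold r; pose proof (Rmin_l d1 d2); lra).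
  assert (Hr2 : (r < d2)%R) by (unfold r; pose proof (Rmin_r d1 d2); lra).
  assert (Hm : Cmod (w + RtoC r - w) = r).
  { replace (w + RtoC r - w) with (RtoC r) by ring. rewrite Cmod_R, Rabs_pos_eq; lra. }
  specialize (K1 (w + RtoC r) ltac:(rewrite Hm; lra)).
  specialize (K2 (w + RtoC r) ltac:(rewrite Hm; lra)).
  set (Q := (f (w + RtoC r) - f w) / (c (w + RtoC r) - c w)) in *.
  assert (Cmod (l1 - l2) <= Cmod (Q - l2) + Cmod (Q - l1))%R.
  { replace (l1 - l2) with ((Q - l2) - (Q - l1)) by ring. unfold Cminus at 1.
    eapply Rle_trans; [apply Cmod_triangle|]. rewrite Cmod_opp. lra. }
  fold d in H. lra.
Qed.

Lemma coord_deriv_eq (c f : C -> C) w l : has_coord_deriv c f w l -> coord_deriv c f w = l.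
Proof.
  intro H. apply (has_coord_deriv_unique c f w); auto.
  apply (epsilon_spec (inhabits (RtoC 0)) (fun l => has_coord_deriv c f w l)). exists l; auto.
Qed.

Definition zeta_sq (v : C) : C := Cexp v * Cexp v.

Lemma is_Cderive_zeta_sq w : is_Cderive zeta_sq w (RtoC 2 * zeta_sq w).
Proof.
  unfold zeta_sq. eapply is_Cderive_eq; [apply (is_Cderive_mult Cexp Cexp); apply is_Cderive_Cexp|].
  ring.
Qed.

Lemma zeta_sq_neq0 w : zeta_sq w <> RtoC 0.
Proof. apply Cmult_neq_0; apply Cexp_neq0. Qed.

Lemma zeta_sq_deriv_neq0 w : RtoC 2 * zeta_sq w <> RtoC 0.
Proof. apply Cmult_neq_0; [intro H; apply RtoC_inj in H; lra | apply zeta_sq_neq0]. Qed.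

Lemma coord_deriv_zeta_sq (f : C -> C) (w l : C) :
  is_Cderive f w l -> coord_deriv zeta_sq f w = l / (RtoC 2 * zeta_sq w).
Proof.
  intro H. apply coord_deriv_eq, has_coord_deriv_of_is_Cderive;
    auto using is_Cderive_zeta_sq, zeta_sq_deriv_neq0.
Qed.

Lemma coord_deriv_shift (s : C) (Hs : forall v, zeta_sq (v + s) = zeta_sq v) f w :
  coord_deriv zeta_sq f (w + s) = coord_deriv zeta_sq (fun u => f (u + s)) w.
Proof.
  unfold coord_deriv. f_equal. apply functional_extensionality. intro l.
  apply propositional_extensionality. split; intros H eps Heps;
    destruct (H eps Heps) as [d [Hd H']]; exists d; split; auto; intros w' Hw'.
  - specialize (H' (w' + s)). rewrite !Hs in H'. apply H'.
    replace (w' + s - (w + s)) with (w' - w) by ring. auto.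
  - specialize (H' (w' - s)). rewrite <- (Hs (w' - s)) in H'.
    replace (w' - s + s) with w' in H' by ring. rewrite (Hs w).
    apply H'. replace (w' - s - w) with (w' - (w + s)) by ring. auto.
Qed.

Lemma iterD2_shift (s : C) (Hs : forall v, zeta_sq (v + s) = zeta_sq v) k f w :
  iterD2 k f (w + s) = iterD2 k (fun u => f (u + s)) w.
Proof.
  revert f w. induction k; intros f w; [reflexivity|].
  simpl. fold zeta_sq. rewrite coord_deriv_shift by auto. f_equal.
  apply functional_extensionality. intro u. apply IHk.
Qed.

Definition iterD2_differentiable (f : C -> C) : Prop :=
  forall k w, exists l, has_coord_deriv zeta_sq (iterD2 k f) w l.

Lemma has_coord_deriv_plus (c f g : C -> C) w l1 l2 :
  has_coord_deriv c f w l1 -> has_coord_deriv c g w l2 ->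
  has_coord_deriv c (fun u => f u + g u) w (l1 + l2).
Proof.
  intros H1 H2 eps Heps.
  destruct (H1 (eps / 2)%R ltac:(lra)) as [d1 [Hd1 K1]].
  destruct (H2 (eps / 2)%R ltac:(lra)) as [d2 [Hd2 K2]].
  exists (Rmin d1 d2). split; [apply Rmin_pos; auto|]. intros w' [Hw0 Hw1].
  specialize (K1 w' (conj Hw0 (Rlt_le_trans _ _ _ Hw1 (Rmin_l _ _)))).
  specialize (K2 w' (conj Hw0 (Rlt_le_trans _ _ _ Hw1 (Rmin_r _ _)))).
  replace ((f w' + g w' - (f w + g w)) / (c w' - c w) - (l1 + l2))
    with (((f w' - f w) / (c w' - c w) - l1) + ((g w' - g w) / (c w' - c w) - l2))
    by (unfold Cdiv; ring).
  eapply Rle_lt_trans; [apply Cmod_triangle | lra].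
Qed.

Lemma iterD2_plus f g : iterD2_differentiable f -> iterD2_differentiable g ->
  forall k, iterD2 k (fun u => f u + g u) = (fun u => iterD2 k f u + iterD2 k g u).
Proof.
  intros Hf Hg k. induction k; [reflexivity|].
  simpl. fold zeta_sq. rewrite IHk. apply functional_extensionality. intro w.
  destruct (Hf k w) as [l1 H1]. destruct (Hg k w) as [l2 H2].
  rewrite (coord_deriv_eq _ _ _ _ H1), (coord_deriv_eq _ _ _ _ H2).
  apply coord_deriv_eq, has_coord_deriv_plus; auto.
Qed.

Lemma peval_cons a p z : peval (a :: p) z = RtoC a + z * peval p z.
Proof. reflexivity. Qed.

Lemma peval_padd p q z : peval (padd p q) z = peval p z + peval q z.
Proof.
  revert q. induction p as [|a p IH]; intros [|b q]; simpl; try ring.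
  rewrite IH, RtoC_plus. ring.
Qed.

Lemma peval_pscale c p z : peval (pscale c p) z = RtoC c * peval p z.
Proof. induction p as [|a p IH]; simpl; [ring|]. rewrite IH, RtoC_mult. ring. Qed.

Lemma peval_pX p z : peval (pX p) z = z * peval p z.
Proof. unfold pX. rewrite peval_cons. ring. Qed.

Lemma peval_phat_even p z : even_poly p -> peval (phat p) z = RtoC 0.
Proof.
  intro Hp. unfold phat.
  assert (H : forall k, (forall i, Nat.odd (k + i) = true -> nth i p 0%R = 0%R) ->
                peval (phat_aux k p) z = RtoC 0).
  { clear Hp. induction p as [|a p IH]; intros k Hk; [reflexivity|].
    simpl phat_aux. rewrite peval_cons, (IH (S k)).
    - destruct (Nat.odd k) eqn:E; [|ring].
      replace a with 0%R by (symmetry; apply (Hk 0%nat); rewrite Nat.add_0_r; auto). ring.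
    - intros i Hi. apply (Hk (S i)). rewrite <- Hi. f_equal. lia. }
  apply H. intros i Hi. apply Hp, Hi.
Qed.

Lemma peval_pbar_even d p z : even_poly p -> peval (pbar d p) z = peval p z.
Proof.
  intro Hp. unfold pbar. rewrite peval_padd, peval_pscale, peval_phat_even by auto. ring.
Qed.

Lemma is_Cderive_Cpown_Cexp k w :
  is_Cderive (fun t => Cpown (Cexp t) k) w (RtoC (INR k) * Cpown (Cexp w) k).
Proof.
  induction k; simpl Cpown.
  - eapply is_Cderive_eq; [apply is_Cderive_const | simpl; ring].
  - eapply is_Cderive_eq; [apply (is_Cderive_mult Cexp); [apply is_Cderive_Cexp | apply IHk]|].
    rewrite S_INR, RtoC_plus. ring.
Qed.

Lemma is_Cderive_peval_Cexp p w :
  is_Cderive (fun t => peval p (Cexp t)) w (peval (pxd p) (Cexp w)).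
Proof.
  assert (H : forall k, is_Cderive (fun t => Cpown (Cexp t) k * peval p (Cexp t)) w
                          (Cpown (Cexp w) k * peval (pxd_aux k p) (Cexp w))).
  { induction p as [|a p IH]; intro k.
    - eapply is_Cderive_eq; [apply is_Cderive_ext with (fun _ => RtoC 0);
        [intro; simpl; ring | apply is_Cderive_const] | simpl; ring].
    - apply is_Cderive_ext with (fun t => RtoC a * Cpown (Cexp t) k + Cpown (Cexp t) (S k) * peval p (Cexp t));
        [intro t; rewrite peval_cons; simpl Cpown; ring|].
      eapply is_Cderive_eq;
        [apply is_Cderive_plus; [apply is_Cderive_scal, is_Cderive_Cpown_Cexp | apply IH]|].
      simpl pxd_aux. rewrite peval_cons, RtoC_mult. simpl Cpown. ring. }
  eapply is_Cderive_eq; [apply is_Cderive_ext with (fun t => Cpown (Cexp t) 0 * peval p (Cexp t));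
    [intro; simpl; ring | apply H] | unfold pxd; simpl; ring].
Qed.

Lemma is_Cderive_Cexp_scal (c w : C) : is_Cderive (fun t => Cexp (c * t)) w (c * Cexp (c * w)).
Proof.
  apply (is_Cderive_comp Cexp (fun t => c * t)); [apply is_Cderive_Cexp|].
  eapply is_Cderive_eq; [apply is_Cderive_scal, is_Cderive_id | ring].
Qed.

Lemma Cexp_mul_zeta_sq n w :
  Cexp (RtoC (-2 * INR (S n)) * w) * (Cexp w * Cexp w) = Cexp (RtoC (-2 * INR n) * w).
Proof. rewrite <- !Cexp_add. f_equal. rewrite S_INR, !RtoC_mult, RtoC_plus. ring. Qed.

(** * Iterated [d/d(zeta^2)] of a solution of the Lommel equation *)

Section LommelIterate.

Variables (a0 : R) (U V : C -> C).
Hypothesis HU : forall w, is_Cderive U w (V w).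
Hypothesis HV : forall w, is_Cderive V w (RtoC a0 - Cexp w * Cexp w * U w).

(* [2^-n zeta^-2n (a0 A_n + B_n U + zeta C_n U')], with [zeta U' = V] *)
Definition lommel_iterate (n : nat) (w : C) : C :=
  RtoC (/ 2 ^ n) * Cexp (RtoC (-2 * INR n) * w) *
  (RtoC a0 * peval (polyA n) (Cexp w) + peval (polyB n) (Cexp w) * U w
   + peval (polyC n) (Cexp w) * V w).

Lemma is_Cderive_lommel_iterate n w : (1 <= n)%nat ->
  is_Cderive (lommel_iterate n) w (RtoC 2 * zeta_sq w * lommel_iterate (S n) w).
Proof.
  intro Hn. unfold lommel_iterate at 1.
  eapply is_Cderive_eq.
  { apply (is_Cderive_mult (fun t => RtoC (/ 2 ^ n) * Cexp (RtoC (-2 * INR n) * t))).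
    - apply is_Cderive_scal, is_Cderive_Cexp_scal.
    - apply is_Cderive_plus; [apply is_Cderive_plus|];
        [apply is_Cderive_scal | apply is_Cderive_mult | apply is_Cderive_mult];
        auto using is_Cderive_peval_Cexp. }
  unfold lommel_iterate, zeta_sq, polyA, polyB, polyC. rewrite ABC_S by exact Hn.
  cbn [fst snd]. fold (polyA n) (polyB n) (polyC n).
  rewrite !peval_padd, !peval_pscale, !peval_pX.
  replace (Cexp (RtoC (-2 * INR (S n)) * w)) with (Cexp (RtoC (-2 * INR n) * w) / (Cexp w * Cexp w)).
  2:{ rewrite <- Cexp_mul_zeta_sq. field. apply Cexp_neq0. }
  replace (RtoC (/ 2 ^ S n)) with (RtoC (/ 2 ^ n) / RtoC 2)
    by (rewrite <- RtoC_div by lra; f_equal; simpl pow; field; apply pow_nonzero; lra).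
  field. apply Cexp_neq0.
Qed.

Lemma has_coord_deriv_lommel_iterate n w : (1 <= n)%nat ->
  has_coord_deriv zeta_sq (lommel_iterate n) w (lommel_iterate (S n) w).
Proof.
  intro Hn. replace (lommel_iterate (S n) w)
    with (RtoC 2 * zeta_sq w * lommel_iterate (S n) w / (RtoC 2 * zeta_sq w))
    by (field; apply zeta_sq_neq0).
  apply has_coord_deriv_of_is_Cderive;
    auto using is_Cderive_lommel_iterate, is_Cderive_zeta_sq, zeta_sq_deriv_neq0.
Qed.

Lemma iterD2_lommel n : (1 <= n)%nat -> iterD2 n U = lommel_iterate n.
Proof.
  intro Hn. induction n as [|n IH]; [lia|].
  apply functional_extensionality. intro w. destruct n as [|n].
  - change (coord_deriv zeta_sq U w = lommel_iterate 1 w).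
    rewrite (coord_deriv_zeta_sq U w (V w) (HU w)).
    unfold lommel_iterate, zeta_sq, polyA, polyB, polyC. simpl ABC. cbn [fst snd peval fold_right].
    replace (Cexp (RtoC (-2 * INR 1) * w))
      with (Cexp (RtoC (-2 * INR 0) * w) / (Cexp w * Cexp w))
      by (rewrite <- Cexp_mul_zeta_sq; field; apply Cexp_neq0).
    replace (RtoC (-2 * INR 0) * w) with (RtoC 0) by (simpl; rewrite Rmult_0_r; ring).
    rewrite Cexp_0. replace (RtoC (/ 2 ^ 1)) with (/ RtoC 2)
      by (rewrite <- RtoC_inv by lra; f_equal; simpl; field).
    field. apply Cexp_neq0.
  - change (coord_deriv zeta_sq (iterD2 (S n) U) w = lommel_iterate (S (S n)) w).
    rewrite IH by lia. apply coord_deriv_eq, has_coord_deriv_lommel_iterate. lia.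
Qed.

Lemma iterD2_differentiable_lommel : iterD2_differentiable U.
Proof.
  intros [|k] w.
  - eexists. apply has_coord_deriv_of_is_Cderive;
      auto using is_Cderive_zeta_sq, zeta_sq_deriv_neq0.
  - rewrite iterD2_lommel by lia. eexists. apply has_coord_deriv_lommel_iterate. lia.
Qed.

End LommelIterate.

(** * Continuation across the sheets *)

(* [w + sheet_shift m] is the point [zeta e^{-m pi i}] of the surface. *)
Definition sheet_shift (m : Z) : C := - (RtoC (IZR m * PI) * Ci).

Lemma Cexp_sheet_shift m w : Cexp (w + sheet_shift m) = RtoC (powerRZ (-1) m) * Cexp w.
Proof.
  rewrite Cexp_add, Cmult_comm. f_equal. destruct (trig_IZR_PI m) as [Hc Hs].
  unfold sheet_shift, Cexp, RtoC, Ci, Cmult, Copp. simpl.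
  replace (- (IZR m * PI * 0 - 0 * 1))%R with 0%R by ring.
  replace (- (IZR m * PI * 1 + 0 * 0))%R with (- (IZR m * PI))%R by ring.
  rewrite cos_neg, sin_neg, Hc, Hs, exp_0.
  apply injective_projections; simpl; ring.
Qed.

Lemma RtoC_powerRZ_m1_sqr m : RtoC (powerRZ (-1) m) * RtoC (powerRZ (-1) m) = RtoC 1.
Proof. rewrite <- RtoC_mult, powerRZ_m1_sqr. reflexivity. Qed.

Lemma zeta_sq_sheet_shift m v : zeta_sq (v + sheet_shift m) = zeta_sq v.
Proof.
  unfold zeta_sq. rewrite Cexp_sheet_shift.
  transitivity (RtoC (powerRZ (-1) m) * RtoC (powerRZ (-1) m) * (Cexp v * Cexp v)); [ring|].
  rewrite RtoC_powerRZ_m1_sqr. ring.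
Qed.

Lemma half_zeta_sq_sheet_shift m v : half_zeta_sq (v + sheet_shift m) = half_zeta_sq v.
Proof.
  unfold half_zeta_sq. rewrite Cexp_sheet_shift.
  transitivity (RtoC (powerRZ (-1) m) * RtoC (powerRZ (-1) m)
                * (Cexp v / RtoC 2 * (Cexp v / RtoC 2))); [field|].
  rewrite RtoC_powerRZ_m1_sqr. ring.
Qed.

Definition Kplus (m : Z) : R := - IZR m * PI ^ 2 * (IZR m + 1) / 4.
Definition Kminus (m : Z) : R := - IZR m * PI ^ 2 * (IZR m - 1) / 4.

(* The jump of [S_{-1,0}]; [S10_jump_dw] is its [w]-derivative, by [H_0' = - H_1]. *)
Definition S10_jump (m : Z) (u : C) : C := RtoC (Kplus m) * H1_0 u + RtoC (Kminus m) * H2_0 u.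
Definition S10_jump_dw (m : Z) (u : C) : C :=
  - (Cexp u * (RtoC (Kplus m) * H1_1 u + RtoC (Kminus m) * H2_1 u)).

Lemma RtoC_neq0 x : x <> 0%R -> RtoC x <> RtoC 0.
Proof. intros Hx H. apply Hx, RtoC_inj, H. Qed.

(* [log (zeta/2)] moves by [s = -m pi i], so [S_{-1,0}] gains
   [s (log(zeta/2) J_0 - P) + s^2/2 J_0], where [P] is the digamma series;
   in terms of [H^(1,2)_0 = J_0 +- i Y_0] that is [S10_jump]. *)
Lemma S10_sheet_shift m u : S10 (u + sheet_shift m) = S10 u + S10_jump m u.
Proof.
  rewrite !S10_pser, half_zeta_sq_sheet_shift. unfold S10_jump, H1_0, H2_0.
  rewrite J0_pser, Y0_pser.
  set (A := pser J0_coef (half_zeta_sq u)). set (P := pser Y0_coef (half_zeta_sq u)).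
  set (L := u - RtoC (ln 2)).
  replace (u + sheet_shift m - RtoC (ln 2)) with (L + sheet_shift m) by (unfold L; ring).
  assert (Hs : sheet_shift m = - (RtoC (IZR m) * RtoC PI * Ci))
    by (unfold sheet_shift; rewrite RtoC_mult; reflexivity).
  assert (Hi : Ci * Ci = - RtoC 1) by (apply injective_projections; simpl; ring).
  replace (RtoC (Kplus m)) with (- (RtoC (IZR m) * RtoC PI * RtoC PI * (RtoC (IZR m) + 1)) / RtoC 4)
    by (unfold Kplus; apply injective_projections; simpl; field).
  replace (RtoC (Kminus m)) with (- (RtoC (IZR m) * RtoC PI * RtoC PI * (RtoC (IZR m) - 1)) / RtoC 4)
    by (unfold Kminus; apply injective_projections; simpl; field).
  replace (RtoC (1 / 2)) with (/ RtoC 2) by (rewrite <- RtoC_inv by lra; f_equal; field).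
  rewrite Hs, RtoC_div by apply PI_neq0.
  apply (Ceq_lin_comb _ _ _ _ (RtoC (IZR m) * RtoC (IZR m) * RtoC PI * RtoC PI * A / RtoC 2) Hi).
  field. apply RtoC_neq0, PI_neq0.
Qed.

Lemma is_Cderive_S10_jump m w : is_Cderive (S10_jump m) w (S10_jump_dw m w).
Proof.
  unfold S10_jump, H1_0, H2_0. eapply is_Cderive_eq.
  - apply is_Cderive_plus; apply is_Cderive_scal;
      [apply is_Cderive_plus | apply is_Cderive_minus];
      auto using is_Cderive_J0, is_Cderive_scal, is_Cderive_Y0.
  - unfold S10_jump_dw, H1_1, H2_1. ring.
Qed.

Lemma is_Cderive_S10_jump_dw m w :
  is_Cderive (S10_jump_dw m) w (RtoC 0 - Cexp w * Cexp w * S10_jump m w).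
Proof.
  apply is_Cderive_ext with (fun t => - (RtoC (Kplus m) * (Cexp t * J1 t + Ci * (Cexp t * Y1 t))
    + RtoC (Kminus m) * (Cexp t * J1 t - Ci * (Cexp t * Y1 t))));
    [intro; unfold S10_jump_dw, H1_1, H2_1; ring|].
  eapply is_Cderive_eq.
  - apply is_Cderive_opp, is_Cderive_plus; apply is_Cderive_scal;
      [apply is_Cderive_plus | apply is_Cderive_minus];
      auto using is_Cderive_ZJ1, is_Cderive_scal, is_Cderive_ZY1.
  - unfold S10_jump, H1_0, H2_0. ring.
Qed.

Lemma Cpown_mult a b n : Cpown (a * b) n = Cpown a n * Cpown b n.
Proof. induction n; simpl; [ring | rewrite IHn; ring]. Qed.

Lemma Cpown_RtoC x n : Cpown (RtoC x) n = RtoC (x ^ n).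
Proof. induction n; simpl; [reflexivity | rewrite IHn, RtoC_mult; reflexivity]. Qed.

Lemma Lommel_sheet_shift n m w : (1 <= n)%nat ->
  Lommel n (w + sheet_shift m) = RtoC (powerRZ (-1) m ^ n) *
    (Lommel n w + RtoC ((-1) ^ n) * Cpown (Cexp w) n / kf n
                  * lommel_iterate 0 (S10_jump m) (S10_jump_dw m) n w).
Proof.
  intro Hn. unfold Lommel.
  rewrite Cexp_sheet_shift, (iterD2_shift _ (zeta_sq_sheet_shift m)).
  rewrite (functional_extensionality _ _ (S10_sheet_shift m)).
  rewrite iterD2_plus by (eapply iterD2_differentiable_lommel;
    auto using is_Cderive_S10, is_Cderive_S10_dw, is_Cderive_S10_jump, is_Cderive_S10_jump_dw).
  rewrite (iterD2_lommel 0 _ _ (is_Cderive_S10_jump m) (is_Cderive_S10_jump_dw m) n Hn).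
  rewrite Cpown_mult, Cpown_RtoC. unfold Cdiv. ring.
Qed.

Lemma Cpown_Cexp n w : Cpown (Cexp w) n = Cexp (RtoC (INR n) * w).
Proof.
  induction n; simpl Cpown.
  - replace (RtoC (INR 0) * w) with (RtoC 0) by (simpl; ring). symmetry. apply Cexp_0.
  - rewrite IHn, <- Cexp_add. f_equal. rewrite S_INR, RtoC_plus. ring.
Qed.

Lemma Cpown_Cexp_neq0 n w : Cpown (Cexp w) n <> RtoC 0.
Proof. rewrite Cpown_Cexp. apply Cexp_neq0. Qed.

Lemma Cexp_neg_2n n w : Cexp (RtoC (-2 * INR n) * w) = / (Cpown (Cexp w) n * Cpown (Cexp w) n).
Proof.
  rewrite Cpown_Cexp. set (E := Cexp (RtoC (INR n) * w)).
  assert (HE : E <> RtoC 0) by apply Cexp_neq0.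
  assert (H : Cexp (RtoC (-2 * INR n) * w) * (E * E) = RtoC 1).
  { unfold E. rewrite <- !Cexp_add, <- Cexp_0. f_equal. rewrite RtoC_mult. ring. }
  rewrite <- (Cmult_1_l (/ (E * E))), <- H. field. exact HE.
Qed.

Close Scope C_scope.

Theorem lemma3p9 (n : nat) (m : Z) (w : C) :
  (0 < n)%nat -> - PI < Im w < PI ->
  let zeta := Cexp w in
  let delta := 1 + powerRZ (-1) (m - 1) in
  let Kp := - IZR m * PI ^ 2 * (IZR m + 1) / 4 in
  let Km := - IZR m * PI ^ 2 * (IZR m - 1) / 4 in
  Lommel n (Cminus w (Cmult (RtoC (IZR m * PI)) Ci)) =
  Cplus
    (Cmult (RtoC (powerRZ (-1) (m * Z.of_nat n))) (Lommel n w))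
    (Cmult (RtoC (powerRZ (-1) ((m + 1) * Z.of_nat n) / (2 ^ n * INR (fact n))))
      (Cmult (Cinv (Cpown zeta n))
        (Cplus
          (Cplus
            (Cmult (RtoC (- delta))
               (Cplus (Cplus (peval (phat (polyA n)) zeta)
                             (Cmult (peval (phat (polyB n)) zeta) (S10 w)))
                      (Cmult (Cmult zeta (peval (phat (polyC n)) zeta)) (dS10 w))))
            (Cmult (peval (pbar delta (polyB n)) zeta)
                   (Cplus (Cmult (RtoC Kp) (H1_0 w)) (Cmult (RtoC Km) (H2_0 w)))))
          (Copp (Cmult (Cmult zeta (peval (pbar delta (polyC n)) zeta))
                   (Cplus (Cmult (RtoC Kp) (H1_1 w)) (Cmult (RtoC Km) (H2_1 w)))))))).
Proof.
  intros Hn _. cbv zeta. fold (Kplus m) (Kminus m).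
  destruct (even_poly_ABC n) as [EA [EB EC]].
  rewrite !peval_phat_even, !peval_pbar_even by auto.
  change (Cminus w (Cmult (RtoC (IZR m * PI)) Ci)) with (Cplus w (sheet_shift m)).
  rewrite Lommel_sheet_shift, powerRZ_m1_mul_nat, powerRZ_m1_succ_mul_nat by exact Hn.
  unfold lommel_iterate, S10_jump, S10_jump_dw. rewrite Cexp_neg_2n.
  assert (Hz := Cpown_Cexp_neq0 n w).
  assert (Hf := fact_pos n). assert (H2 : 2 ^ n <> 0) by (apply pow_nonzero; lra).
  replace (RtoC ((-1) ^ n * powerRZ (-1) m ^ n / (2 ^ n * INR (fact n))))
    with (RtoC ((-1) ^ n) * RtoC (powerRZ (-1) m ^ n) * RtoC (/ 2 ^ n) / kf n)%C
    by (unfold kf; rewrite <- !RtoC_mult, <- RtoC_div by lra; f_equal; field; lra).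
  field. split; [exact Hz | apply RtoC_neq0; lra].
Qed.
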